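(* Let $\Gamma$ be a subalgebra of the $\Bbbk$-algebra $A$ such that (i) $\Gamma$ is noetherian, (ii) $\Gamma$ is quasicommutative, and (iii) $\Gamma$ is quasicentral in $A$. Then $\Gamma$ is a Harish-Chandra block subalgebra of $A$ with respect to the equality relation. Furthermore, for every $\mathfrak m\in\mathrm{cfs}(\Gamma)$ and $m\ge1$, $$\mathrm{Supp}(A/A\mathfrak m^m)\subseteq X(\mathfrak m):=\bigcup_{a\in A}\{\mathfrak n\in\mathrm{cfs}(\Gamma):S_{\mathfrak n}\in\mathrm{Fact}(\Gamma a\Gamma/\Gamma a\mathfrak m)\}.$$
   Context: $\mathrm{cfs}(\Gamma)$: maximal two-sided ideals $\mathfrak m$ of $\Gamma$ with $\dim\Gamma/\mathfrak m<\infty$; $S_{\mathfrak m}$ is the unique simple $\Gamma/\mathfrak m$-module; $\mathrm{Fact}(M)$ is the set of composition factors of a finite-dimensional module $M$. $\Gamma$ is quasicommutative if $\mathrm{Ext}^1_\Gamma(S_{\mathfrak m},S_{\mathfrak n})=0$ for distinct $\mathfrak m,\mathfrak n\in\mathrm{cfs}(\Gamma)$; $\Gamma$ is quasicentral in $A$ if $\Gamma a\Gamma$ is finitely generated as a left and as a right $\Gamma$-module for every $a\in A$. With respect to the equality relation, the classes are singletons $\{\mathfrak m\}$ (identified with $\mathfrak m$), and for a $\Gamma$-module $V$, $V(\mathfrak m)=\{v:\mathfrak m^kv=0$ for some $k\ge0\}$; $V$ is a block module if $V=\bigoplus_{\mathfrak m}V(\mathfrak m)$, and $\mathrm{Supp}(V)=\{\mathfrak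 m:V(\mathfrak m)\ne0\}$. $\Gamma$ is a Harish-Chandra block subalgebra of $A$ w.r.t. equality if $A/A\mathfrak m^k$ is a block module over $\Gamma$ for all $\mathfrak m\in\mathrm{cfs}(\Gamma)$, $k\ge0$. *)

From HB Require Import structures.
From mathcomp Require Import all_boot all_order all_algebra.
Set Implicit Arguments. Unset Strict Implicit. Unset Printing Implicit Defensive.
Import GRing.Theory.
Local Open Scope ring_scope.

Section Defs.
Variables (K : fieldType) (A : algType K).
Implicit Types (G m n Q P N I J L : A -> Prop).

Definition is_subalg G : Prop :=
  [/\ G 1, (forall x y, G x -> G y -> G (x + y)),
      (forall x y, G x -> G y -> G (x * y)) &
      (forall (c : K) x, G x -> G (c *: x))].

Definition lsub G N : Prop :=
  [/\ N 0, (forall x y, N x -> N y -> N (x + y)) &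
      (forall g x, G g -> N x -> N (g * x))].

Definition rsub G N : Prop :=
  [/\ N 0, (forall x y, N x -> N y -> N (x + y)) &
      (forall g x, G g -> N x -> N (x * g))].

Definition left_ideal G I : Prop := (forall x, I x -> G x) /\ lsub G I.
Definition right_ideal G I : Prop := (forall x, I x -> G x) /\ rsub G I.

Definition noetherian G : Prop :=
  (forall I : nat -> A -> Prop, (forall i, left_ideal G (I i)) ->
     (forall i x, I i x -> I i.+1 x) ->
     exists N0 : nat, forall i, (N0 <= i)%N -> forall x, I i x -> I N0 x) /\
  (forall I : nat -> A -> Prop, (forall i, right_ideal G (I i)) ->
     (forall i x, I i x -> I i.+1 x) ->
     exists N0 : nat, forall i, (N0 <= i)%N -> forall x, I i x -> I N0 x).

Definition two_ideal G m : Prop := left_ideal G m /\ right_ideal G m.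

(* cfs(Gamma): maximal two-sided ideals of finite codimension *)
Definition cfs G m : Prop :=
  [/\ two_ideal G m, ~ m 1,
      (forall J, two_ideal G J -> (forall x, m x -> J x) ->
                 (forall x, J x -> m x) \/ J 1) &
      (exists s : seq A, (forall i : 'I_(size s), G s`_i) /\
         forall g, G g -> exists c : 'I_(size s) -> K,
            m (g - \sum_(i < size s) c i *: s`_i))].

Definition is_Gmod G (E : vectType K) (act : A -> 'End(E)) : Prop :=
  [/\ act 1 = \1%VF,
      (forall x y, G x -> G y -> act (x * y) = (act x \o act y)%VF),
      (forall x y, G x -> G y -> act (x + y) = act x + act y) &
      (forall (c : K) x, G x -> act (c *: x) = c *: act x)].

Definition Gsubmod G (E : vectType K) (act : A -> 'End(E)) (U : {vspace E}) :=
  forall x, G x -> (act x @: U <= U)%VS.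

(* W/U is a simple module annihilated by n, i.e. W/U is isomorphic to S_n *)
Definition simple_sq_ann G (E : vectType K) (act : A -> 'End(E)) n
    (U W : {vspace E}) : Prop :=
  [/\ (U <= W)%VS, ~~ (W <= U)%VS,
      (forall N : {vspace E}, Gsubmod G act N -> (U <= N)%VS -> (N <= W)%VS ->
          (N <= U)%VS \/ (W <= N)%VS) &
      (forall x, n x -> (act x @: W <= U)%VS)].

(* Ext^1_Gamma(S_m, S_n) = 0 (Yoneda): every extension
   0 -> S_n -> E -> S_m -> 0 of Gamma-modules splits *)
Definition Ext1_vanish G m n : Prop :=
  forall (E : vectType K) (act : A -> 'End(E)), is_Gmod G act ->
  forall U : {vspace E}, Gsubmod G act U ->
    simple_sq_ann G act n 0%VS U -> simple_sq_ann G act m U fullv ->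
    exists W : {vspace E}, [/\ Gsubmod G act W, (U :&: W = 0)%VS &
                               (U + W = fullv)%VS].

Definition quasicommutative G : Prop :=
  forall m n, cfs G m -> cfs G n -> m <> n -> Ext1_vanish G m n.

Definition GaG G (a : A) : A -> Prop := fun x =>
  exists r (g h : 'I_r -> A), (forall i, G (g i) /\ G (h i)) /\
     x = \sum_(i < r) g i * a * h i.

Definition Gam G (a : A) m : A -> Prop := fun x =>
  exists r (g h : 'I_r -> A), (forall i, G (g i) /\ m (h i)) /\
     x = \sum_(i < r) g i * a * h i.

Definition lspan G (s : seq A) : A -> Prop := fun x =>
  exists c : 'I_(size s) -> A, (forall i, G (c i)) /\
     x = \sum_(i < size s) c i * s`_i.
Definition rspan G (s : seq A) : A -> Prop := fun x =>
  exists c : 'I_(size s) -> A, (forall i, G (c i)) /\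
     x = \sum_(i < size s) s`_i * c i.

Definition quasicentral G : Prop :=
  forall a : A,
    (exists s : seq A, forall x, GaG G a x <-> lspan G s x) /\
    (exists s : seq A, forall x, GaG G a x <-> rspan G s x).

(* products of j elements of m (elements spanning m^j; m^0 = Gamma) *)
Definition prodset m (j : nat) : A -> Prop := fun x =>
  exists p : 'I_j -> A, (forall i, m (p i)) /\ x = \prod_(i < j) p i.

Definition AmPow m (k : nat) : A -> Prop := fun x =>
  exists r (c p : 'I_r -> A), (forall i, prodset m k (p i)) /\
     x = \sum_(i < r) c i * p i.

(* for V = A/L: x + L lies in V(n) = {v | n^j v = 0 for some j} *)
Definition in_Vn n L (x : A) : Prop :=
  exists j, forall p, prodset n j p -> L (p * x).

(* A/L is a block module: A/L = (+)_{n in cfs} V(n) (internal direct sum) *)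
Definition block_quot G L : Prop :=
  (forall x, exists r (ns : 'I_r -> A -> Prop) (xs : 'I_r -> A),
      [/\ (forall i, cfs G (ns i)), injective ns,
          (forall i, in_Vn (ns i) L (xs i)) &
          L (x - \sum_(i < r) xs i)]) /\
  (forall r (ns : 'I_r -> A -> Prop) (xs : 'I_r -> A),
      (forall i, cfs G (ns i)) -> injective ns ->
      (forall i, in_Vn (ns i) L (xs i)) -> L (\sum_(i < r) xs i) ->
      forall i, L (xs i)).

Definition HC_block_subalg G : Prop :=
  forall m, cfs G m -> forall k : nat, block_quot G (AmPow m k).

Definition Supp G L n : Prop :=
  cfs G n /\ exists x, in_Vn n L x /\ ~ L x.

Definition simple_pq G Q P : Prop :=
  [/\ (forall x, Q x -> P x), (exists x, P x /\ ~ Q x) &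
      (forall N, lsub G N -> (forall x, Q x -> N x) -> (forall x, N x -> P x) ->
         (forall x, N x -> Q x) \/ (forall x, P x -> N x))].

(* S_n in Fact(P/Q): S_n is a factor of some composition series of P/Q *)
Definition in_Fact G n Q P : Prop :=
  exists (r : nat) (Ls : nat -> A -> Prop),
    [/\ (forall i, (i <= r)%N -> lsub G (Ls i)),
        (forall x, Ls 0%N x <-> Q x), (forall x, Ls r x <-> P x),
        (forall i, (i < r)%N -> simple_pq G (Ls i) (Ls i.+1)) &
        exists i, (i < r)%N /\ forall x y, n x -> Ls i.+1 y -> Ls i (x * y)].

Definition Xset G m n : Prop :=
  cfs G n /\ exists a : A, in_Fact G n (Gam G a m) (GaG G a).

End Defs.

(* For x in A, the quotient (Γ x Γ + A m^k)/A m^k is a finite-dimensional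
   Γ-module: Γ/Γ m^k is finite-dimensional because Γ is noetherian and Γ/m is
   finite-dimensional, and Γ x Γ is a finitely generated right Γ-module by
   quasicentrality.  A finite-dimensional Γ-module all of whose extensions
   between non-isomorphic simple factors split is the direct sum of its
   generalized eigenspaces V(n): split off a simple submodule S_{n0}, decompose
   the quotient by induction and lift each summand V(n), n <> n0, along a
   complement of S_{n0}; the sum is direct because n^i and n'^j are comaximal.
   For the support, take x outside A m^e with n x inside; then x lies in
   A m^i \ A m^{i+1} for some i < e, and peeling off the terms c p (p a product
   of i elements of m) of x produces a nonzero subquotient of Γ c Γ / Γ c m
   annihilated by n, so S_n is a composition factor of Γ c Γ / Γ c m. *)

From Stdlib Require Import Classical ClassicalEpsilon FunctionalExtensionality PropExtensionality.
From HB Require Import structures.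
From mathcomp Require Import all_boot all_order all_algebra zify.
Set Implicit Arguments. Unset Strict Implicit. Unset Printing Implicit Defensive.
Import GRing.Theory.
Local Open Scope ring_scope.

Lemma pred_ext (T : Type) (P1 P2 : T -> Prop) : (forall x, P1 x <-> P2 x) -> P1 = P2.
Proof.
by move=> h; apply: functional_extensionality => x; apply: propositional_extensionality.
Qed.

Lemma forall_in_cons (T : eqType) (P : T -> Prop) (a : T) (s : seq T) :
  {in a :: s, forall x, P x} <-> P a /\ {in s, forall x, P x}.
Proof.
split=> [h|[ha hs] x]; last by rewrite inE => /predU1P [->|/hs].
by split=> [|x hx]; apply: h; rewrite inE ?eqxx ?hx ?orbT.
Qed.

Lemma not_subset_witness (T : Type) (P Q : T -> Prop) :
  ~ (forall x, P x -> Q x) -> exists x, P x /\ ~ Q x.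
Proof.
by move=> PQ; apply: NNPP => h; apply: PQ => x Px; apply: NNPP => Qx; apply: h; exists x.
Qed.

Lemma classic_ex_minn (P : nat -> Prop) :
  (exists n, P n) -> exists n, P n /\ forall m, P m -> (n <= m)%N.
Proof.
pose p n := if excluded_middle_informative (P n) then true else false.
have pP n : p n <-> P n by rewrite /p; case: excluded_middle_informative.
case=> n /pP pn; case: (ex_minnP (ex_intro _ n pn)) => k /pP Pk kmin.
by exists k; split=> // m /pP /kmin.
Qed.

Lemma classic_ex_maxn (P : nat -> Prop) (B : nat) :
  (exists n, P n) -> (forall n, P n -> (n <= B)%N) ->
  exists n, P n /\ forall m, P m -> (m <= n)%N.
Proof.
pose p n := if excluded_middle_informative (P n) then true else false.
have pP n : p n <-> P n by rewrite /p; case: excluded_middle_informative.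
case=> n /pP pn leB; have leB' k : p k -> (k <= B)%N by move/pP/leB.
case: (ex_maxnP (ex_intro _ n pn) leB') => k /pP Pk kmax.
by exists k; split=> // m /pP /kmax.
Qed.

Lemma classic_ex_drop (P : nat -> Prop) e : P 0%N -> ~ P e ->
  exists i, [/\ (i < e)%N, P i & ~ P i.+1].
Proof.
elim: e => [//|e IH] P0 Pe; have [Pe'|Pe'] := classic (P e); first by exists e.
by have [i [ie Pi Pi']] := IH P0 Pe'; exists i; split=> //; apply: ltnW.
Qed.

(** * Linear algebra modulo a subspace *)

Section LinearAlgebraModulo.
Variables (K : fieldType) (V : lmodType K).
Implicit Types (s t : seq V) (P Q N M : V -> Prop).

Definition kspan s x := exists c : 'I_(size s) -> K, x = \sum_(i < size s) c i *: s`_i.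

Definition subspace N :=
  [/\ N 0, (forall x y, N x -> N y -> N (x + y)) & (forall (c : K) x, N x -> N (c *: x))].

Definition eqmod Q x y := Q (x - y).

Definition spans_mod s Q P := forall x, P x -> exists z, kspan s z /\ eqmod Q x z.

Definition findim_mod Q P := exists s, spans_mod s Q P.

Lemma kspan_nil x : kspan [::] x <-> x = 0.
Proof.
split; first by case=> c ->; rewrite big_ord0.
by move=> ->; exists (fun _ => 0); rewrite big_ord0.
Qed.

Lemma kspan_cons a s x : kspan (a :: s) x <-> exists k z, kspan s z /\ x = k *: a + z.
Proof.
split=> [[c ->]|[k [z [[c ->] ->]]]].
  rewrite /= big_ord_recl; exists (c ord0), (\sum_(i < size s) c (lift ord0 i) *: s`_i).
  by split=> //; exists (fun i => c (lift ord0 i)).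
exists (fun i : 'I_(size s).+1 => if unlift ord0 i is Some j then c j else k).
rewrite /= big_ord_recl /= unlift_none; congr (_ + _).
by apply: eq_bigr => i _; rewrite liftK.
Qed.

Lemma kspan0 s : kspan s 0.
Proof. by exists (fun _ => 0); rewrite big1 // => i _; rewrite scale0r. Qed.

Lemma kspanD s x y : kspan s x -> kspan s y -> kspan s (x + y).
Proof.
case=> c -> [d ->]; exists (fun i => c i + d i).
by rewrite -big_split; apply: eq_bigr => i _; rewrite scalerDl.
Qed.

Lemma kspanZ s k x : kspan s x -> kspan s (k *: x).
Proof.
case=> c ->; exists (fun i => k * c i).
by rewrite scaler_sumr; apply: eq_bigr => i _; rewrite scalerA.
Qed.

Lemma kspanB s x y : kspan s x -> kspan s y -> kspan s (x - y).
Proof. by move=> hx /(kspanZ (-1)); rewrite scaleN1r; apply: kspanD. Qed.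

Lemma kspan_cat s t x y : kspan s x -> kspan t y -> kspan (s ++ t) (x + y).
Proof.
elim: s x => [|a s IH] x /=; first by move=> /kspan_nil -> h; rewrite add0r.
move=> /kspan_cons [k [z [hz ->]]] hy; apply/kspan_cons.
by exists k, (z + y); split; [apply: IH | rewrite addrA].
Qed.

Lemma kspan_map (f : {linear V -> V}) s z : kspan s z -> kspan (map f s) (f z).
Proof.
elim: s z => [z /kspan_nil ->|a s IH z /kspan_cons [k [z' [hz' ->]]]].
  by rewrite linear0; apply: kspan0.
by apply/kspan_cons; exists k, (f z'); rewrite linearD linearZ; split=> //; apply: IH.
Qed.

Section Subspace.
Variable N : V -> Prop.
Hypothesis subN : subspace N.

Lemma subspace0 : N 0. Proof. by case: subN. Qed.
Lemma subspaceD x y : N x -> N y -> N (x + y). Proof. by case: subN => _ h _; apply: h. Qed.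
Lemma subspaceZ k x : N x -> N (k *: x). Proof. by case: subN => _ _ h; apply: h. Qed.
Lemma subspaceN x : N x -> N (- x). Proof. by rewrite -scaleN1r; apply: subspaceZ. Qed.
Lemma subspaceB x y : N x -> N y -> N (x - y).
Proof. by move=> hx /subspaceN; apply: subspaceD. Qed.

Lemma subspace_sum (I : Type) (r : seq I) (F : I -> V) :
  (forall i, N (F i)) -> N (\sum_(i <- r) F i).
Proof. by move=> h; apply: (big_ind N subspace0 subspaceD). Qed.

Lemma subspace_kspan s x : {in s, forall y, N y} -> kspan s x -> N x.
Proof.
move=> hs [c ->]; apply: subspace_sum => i; apply/subspaceZ/hs.
exact: mem_nth.
Qed.

Lemma eqmod_refl x : eqmod N x x. Proof. by rewrite /eqmod subrr; apply: subspace0. Qed.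
Lemma eqmod_sym x y : eqmod N x y -> eqmod N y x.
Proof. by rewrite /eqmod => h; rewrite -opprB; apply: subspaceN. Qed.
Lemma eqmod_trans y x z : eqmod N x y -> eqmod N y z -> eqmod N x z.
Proof. by rewrite /eqmod => h1 h2; rewrite -(subrKA y); apply: subspaceD. Qed.
Lemma eqmodD x x' y y' : eqmod N x x' -> eqmod N y y' -> eqmod N (x + y) (x' + y').
Proof. by rewrite /eqmod opprD addrACA; apply: subspaceD. Qed.
Lemma eqmodZ k x x' : eqmod N x x' -> eqmod N (k *: x) (k *: x').
Proof. by rewrite /eqmod -scalerBr; apply: subspaceZ. Qed.
Lemma eqmodB x x' y y' : eqmod N x x' -> eqmod N y y' -> eqmod N (x - y) (x' - y').
Proof. by move=> hx hy; apply: eqmodD hx _; rewrite /eqmod opprK addrC; apply: eqmod_sym. Qed.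
Lemma eqmod_mem x y : eqmod N x y -> N y -> N x.
Proof. by rewrite /eqmod => h hy; rewrite -(subrK y x); apply: subspaceD. Qed.
Lemma eqmod_sum (I : Type) (r : seq I) (F F' : I -> V) :
  (forall i, eqmod N (F i) (F' i)) -> eqmod N (\sum_(i <- r) F i) (\sum_(i <- r) F' i).
Proof. by move=> h; apply: (big_ind2 (eqmod N)) => //; [apply: eqmod_refl | apply: eqmodD]. Qed.

End Subspace.

Lemma spans_mod_sub s Q N P P' : spans_mod s Q P ->
  (forall x, Q x -> N x) -> (forall x, P' x -> P x) -> spans_mod s N P'.
Proof. by move=> h QN P'P x /P'P /h [z [hz /QN hq]]; exists z. Qed.

Lemma spans_mod_trans s t I J P : spans_mod s J P -> spans_mod t I J -> spans_mod (s ++ t) I P.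
Proof.
move=> hs ht x /hs [z [hz /ht [z' [hz' hI]]]]; exists (z + z'); split; first exact: kspan_cat.
by rewrite /eqmod opprD addrA.
Qed.

Lemma findim_mod_trans I J P : findim_mod J P -> findim_mod I J -> findim_mod I P.
Proof. by case=> s hs [t ht]; exists (s ++ t); apply: spans_mod_trans ht. Qed.

Lemma spans_mod_nil Q P : spans_mod [::] Q P -> forall x, P x -> Q x.
Proof. by move=> h x /h [z [/kspan_nil -> ]]; rewrite /eqmod subr0. Qed.

Lemma spans_mod_within s Q M : subspace Q -> subspace M -> spans_mod s Q M ->
  exists s', [/\ {in s', forall x, M x}, (size s' <= size s)%N & spans_mod s' Q M].
Proof.
move=> subQ; elim: s M => [|a s IH] M subM hs; first by exists [::].
pose M' y := M y /\ exists z, kspan s z /\ eqmod Q y z.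
have subM' : subspace M'.
  split.
  - split; first exact: subspace0 subM.
    by exists 0; split; [exact: kspan0 | exact: eqmod_refl].
  - move=> x y [hx [z1 [h1 q1]]] [hy [z2 [h2 q2]]]; split; first exact: subspaceD.
    by exists (z1 + z2); split; [exact: kspanD | exact: eqmodD].
  - move=> c x [hx [z [hz q]]]; split; first exact: subspaceZ.
    by exists (c *: z); split; [exact: kspanZ | exact: eqmodZ].
have [s'' [hall hsz hsp]] := IH M' subM' (fun y hy => hy.2).
have hallM : {in s'', forall x, M x} by move=> x /hall [].
case: (classic (exists y0 k z, [/\ M y0, k != 0, kspan s z & eqmod Q y0 (k *: a + z)])).
  case=> y0 [k [z [hy0 hk hz hq]]]; exists (y0 :: s''); split => //.
    by apply/forall_in_cons.
  move=> y hy; have [w [/kspan_cons [k' [z' [hz' hw]]] hq']] := hs y hy.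
  subst w.
  pose c := k' / k.
  have hy1 : M' (y - c *: y0).
    split; first by apply: (subspaceB subM) => //; apply: (subspaceZ subM).
    exists (z' - c *: z); split; first by apply: kspanB => //; apply: kspanZ.
    apply: (eqmod_trans subQ (y := (k' *: a + z') - c *: (k *: a + z))).
      by apply: eqmodB => //; apply: eqmodZ.
    by rewrite scalerDr scalerA divfK // opprD addrACA subrr add0r; apply: eqmod_refl.
  have [w' [hw' hq'']] := hsp _ hy1.
  exists (c *: y0 + w'); split; first by apply/kspan_cons; exists c, w'.
  by move: hq''; rewrite /eqmod opprD addrA [y - _]addrC.
move=> hno; exists s''; split => //; first exact: leqW.
move=> y hy; apply: hsp; split=> //.
have [w [/kspan_cons [k' [z' [hz' hw]]] hq']] := hs y hy.
exists z'; split=> //.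
have k0 : k' = 0.
  apply/eqP/negP => hk; apply: hno; exists y, k', z'; split=> //; first exact/negP.
  by rewrite -hw.
by move: hq'; rewrite hw k0 scale0r add0r.
Qed.

Lemma spans_mod_drop s N (c : 'I_(size s) -> K) : subspace N ->
  (exists i, c i != 0) -> N (\sum_(i < size s) c i *: s`_i) ->
  exists s', (size s' < size s)%N /\ spans_mod s' N (kspan s).
Proof.
move=> subN; elim: s c => [|a s IH] c /=; first by case=> -[].
move=> hc; rewrite big_ord_recl /=.
set r := \sum_(i < size s) _.
have hr : kspan s r by exists (fun i => c (lift ord0 i)).
have [c0|c0] := eqVneq (c ord0) 0.
  rewrite c0 scale0r add0r => hNr.
  have [|s'' [hsz hsp]] := IH (fun i => c (lift ord0 i)) _ hNr.
    case: hc => i; case: (unliftP ord0 i) => [j ->|->]; last by rewrite c0 eqxx.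
    by exists j.
  exists (a :: s''); split => // x /kspan_cons [k [z [/hsp [z' [hz' hq]] ->]]].
  exists (k *: a + z'); split; first by apply/kspan_cons; exists k, z'.
  by apply: eqmodD => //; apply: eqmod_refl.
move=> hNa; exists s; split => // x /kspan_cons [k [z [hz ->]]].
exists (k *: (- (c ord0)^-1 *: r) + z); split.
  by apply: kspanD => //; apply/kspanZ/kspanZ.
apply: eqmodD => //; last exact: eqmod_refl.
apply: eqmodZ => //; rewrite /eqmod scaleNr opprK -[X in X + _](scale1r a) -(mulVf c0).
by rewrite -scalerA -scalerDr; apply: subspaceZ.
Qed.

Lemma spans_mod_minimal Q P : subspace Q -> subspace P -> findim_mod Q P ->
  exists s, [/\ {in s, forall x, P x}, spans_mod s Q P &
                forall t, spans_mod t Q P -> (size s <= size t)%N].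
Proof.
move=> subQ subP [t0 ht0].
have [d [[t [<- ht]] dmin]] := classic_ex_minn
  (ex_intro (fun d => exists t, size t = d /\ spans_mod t Q P) _ (ex_intro _ t0 (conj erefl ht0))).
have [s [hsP hsz hs]] := spans_mod_within subQ subP ht.
by exists s; split => // u hu; apply: leq_trans hsz _; apply: dmin; exists u.
Qed.

Lemma minimal_spans_free s Q P : subspace Q -> spans_mod s Q P ->
  (forall t, spans_mod t Q P -> (size s <= size t)%N) ->
  forall c : 'I_(size s) -> K, Q (\sum_(i < size s) c i *: s`_i) -> forall i, c i = 0.
Proof.
move=> subQ hs smin c hc i; apply/eqP/negP => ci.
have [s' [hsz hsp]] := spans_mod_drop subQ (ex_intro _ i (introN idP ci)) hc.
suff : (size s <= size s')%N by rewrite leqNgt hsz.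
apply: smin => x /hs [z [hz hq]]; have [z' [hz' hq']] := hsp z hz.
by exists z'; split=> //; apply: eqmod_trans hq hq'.
Qed.

Lemma spans_mod_shrink s Q N P w : subspace Q -> subspace N -> (forall x, Q x -> N x) ->
  spans_mod s Q P -> P w -> N w -> ~ Q w ->
  exists s', (size s' < size s)%N /\ spans_mod s' N P.
Proof.
move=> subQ subN QN hs hw hNw hQw.
have [z [[c hz] hq]] := hs w hw.
have hc : exists i, c i != 0.
  apply: NNPP => hno; apply: hQw; apply: (eqmod_mem subQ hq).
  rewrite hz big1; first exact: subspace0 subQ.
  move=> i _.
  suff -> : c i = 0 by rewrite scale0r.
  by apply/eqP; apply: contraT => h; case: hno; exists i.
have hNz : N (\sum_(i < size s) c i *: s`_i).
  by rewrite -hz; apply: (eqmod_mem subN (eqmod_sym subN (QN _ hq))).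
have [s' [hsz hsp]] := spans_mod_drop subN hc hNz.
exists s'; split=> // x /hs [y [hy hqy]]; have [y' [hy' hq']] := hsp y hy.
by exists y'; split=> //; apply: (eqmod_trans subN (QN _ hqy) hq').
Qed.

End LinearAlgebraModulo.

Lemma findim_mod_kernel (K : fieldType) (V W : lmodType K) (f : {linear V -> W})
    (I J : V -> Prop) (Q R : W -> Prop) :
  subspace J -> subspace Q -> (forall x, J x -> R (f x)) ->
  (forall x, J x -> Q (f x) -> I x) -> findim_mod Q R -> findim_mod I J.
Proof.
move=> subJ subQ JR JQI [s hs].
pose M y := exists g, J g /\ eqmod Q y (f g).
have subM : subspace M.
  split.
  - by exists 0; rewrite linear0; split; [apply: subspace0 | apply: eqmod_refl].
  - move=> x y [g [hg hx]] [g' [hg' hy]]; exists (g + g'); rewrite linearD.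
    by split; [apply: subspaceD | apply: eqmodD].
  - move=> c x [g [hg hx]]; exists (c *: g); rewrite linearZ.
    by split; [apply: subspaceZ | apply: eqmodZ].
have hsM : spans_mod s Q M.
  move=> y [g [hg hyg]]; have [z [hz hq]] := hs _ (JR _ hg).
  by exists z; split=> //; apply: eqmod_trans hyg hq.
have [sM [hsM' _ hsMsp]] := spans_mod_within subQ subM hsM.
have [C [hCJ hC]] : exists C : seq V, {in C, forall g, J g} /\
    forall z, kspan sM z -> exists z', kspan C z' /\ eqmod Q z (f z').
  elim: sM hsM' {hsMsp} => [_|y sM IH /forall_in_cons [[g [hg hyg]] /IH [C [hCJ hC]]]].
    exists [::]; split=> // z /kspan_nil ->; exists 0.
    by rewrite linear0; split; [apply: kspan0 | apply: eqmod_refl].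
  exists (g :: C); split; first exact/forall_in_cons.
  move=> z /kspan_cons [k [z1 [/hC [z' [hz' hq]] ->]]].
  exists (k *: g + z'); split; first by apply/kspan_cons; exists k, z'.
  by rewrite linearD linearZ; apply: eqmodD => //; apply: eqmodZ.
exists C => x hx.
have [w [hw hqw]] := hsMsp (f x) (ex_intro _ x (conj hx (eqmod_refl subQ _))).
have [z' [hz' hqz']] := hC w hw.
have hz'J : J z' := subspace_kspan subJ hCJ hz'.
exists z'; split=> //; apply: JQI; first exact: subspaceB.
by rewrite linearB; apply: eqmod_trans hqw hqz'.
Qed.

(** * Submodules and ideals of a subalgebra *)

Section Subalgebra.
Variables (K : fieldType) (A : algType K) (G : A -> Prop).
Hypothesis subG : is_subalg G.
Implicit Types (P Q N R L J X m n : A -> Prop) (s : seq A).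

Lemma subalg1 : G 1. Proof. by case: subG. Qed.
Lemma subalgD x y : G x -> G y -> G (x + y). Proof. by case: subG => _ h _ _; apply: h. Qed.
Lemma subalgM x y : G x -> G y -> G (x * y). Proof. by case: subG => _ _ h _; apply: h. Qed.
Lemma subalgZ (c : K) x : G x -> G (c *: x). Proof. by case: subG => _ _ _ h; apply: h. Qed.
Lemma subalg0 : G 0. Proof. by rewrite -(scale0r 1); apply/subalgZ/subalg1. Qed.
Lemma subalg_subspace : subspace G.
Proof. by split; [apply: subalg0 | apply: subalgD | apply: subalgZ]. Qed.
Lemma subalgB x y : G x -> G y -> G (x - y).
Proof. by move=> hx hy; apply: (subspaceB subalg_subspace). Qed.

Lemma lsub0 N : lsub G N -> N 0. Proof. by case. Qed.
Lemma lsubD N x y : lsub G N -> N x -> N y -> N (x + y). Proof. by case=> _ h _; apply: h. Qed.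
Lemma lsubM N g x : lsub G N -> G g -> N x -> N (g * x). Proof. by case=> _ _ h; apply: h. Qed.
Lemma lsub_subspace N : lsub G N -> subspace N.
Proof.
move=> lN; split; [exact: lsub0 | by move=> x y; apply: lsubD | move=> c x hx].
by rewrite -[x]mul1r scalerAl; apply: lsubM => //; apply/subalgZ/subalg1.
Qed.
Lemma lsubN N x : lsub G N -> N x -> N (- x).
Proof. by move=> lN; apply: (subspaceN (lsub_subspace lN)). Qed.
Lemma lsubB N x y : lsub G N -> N x -> N y -> N (x - y).
Proof. by move=> lN hx hy; apply: (subspaceB (lsub_subspace lN)). Qed.
Lemma lsub_sum N : lsub G N ->
  forall (I : Type) (r : seq I) (F : I -> A), (forall i, N (F i)) -> N (\sum_(i <- r) F i).
Proof. by move=> lN I r F hF; apply: (subspace_sum (lsub_subspace lN)). Qed.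
Lemma eqmod_lsubM N g x y : lsub G N -> G g -> eqmod N x y -> eqmod N (g * x) (g * y).
Proof. by rewrite /eqmod -mulrBr => lN hg; apply: lsubM. Qed.

Lemma lsub_add P N : lsub G P -> lsub G N ->
  lsub G (fun y => exists u v, [/\ P u, N v & y = u + v]).
Proof.
move=> lP lN; split.
- by exists 0, 0; rewrite addr0; split=> //; apply: lsub0.
- move=> x y [u [v [hu hv ->]]] [u' [v' [hu' hv' ->]]].
  by exists (u + u'), (v + v'); rewrite addrACA; split=> //; apply: lsubD.
- move=> g x hg [u [v [hu hv ->]]].
  by exists (g * u), (g * v); rewrite mulrDr; split=> //; apply: lsubM.
Qed.

Lemma lsubI P N : lsub G P -> lsub G N -> lsub G (fun y => P y /\ N y).
Proof.
move=> lP lN; split.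
- by split; apply: lsub0.
- by move=> x y [hx1 hx2] [hy1 hy2]; split; apply: lsubD.
- by move=> g x hg [hx1 hx2]; split; apply: lsubM.
Qed.

Lemma two_idealP J : (forall x, J x -> G x) -> lsub G J ->
  (forall g x, G g -> J x -> J (x * g)) -> two_ideal G J.
Proof. by move=> JG [J0 JD JM] JMr; do 2!split. Qed.
Lemma two_ideal_sub J x : two_ideal G J -> J x -> G x. Proof. by case=> -[h _] _; apply: h. Qed.
Lemma two_ideal_lsub J : two_ideal G J -> lsub G J. Proof. by case=> -[_ h]. Qed.
Lemma two_idealMr J g x : two_ideal G J -> G g -> J x -> J (x * g).
Proof. by case=> _ [_ [_ _ h]]; apply: h. Qed.

Lemma cfs_two_ideal m : cfs G m -> two_ideal G m. Proof. by case. Qed.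
Lemma cfs_sub m x : cfs G m -> m x -> G x. Proof. by move/cfs_two_ideal/two_ideal_sub; apply. Qed.
Lemma cfs_lsub m : cfs G m -> lsub G m. Proof. by move/cfs_two_ideal/two_ideal_lsub. Qed.

Lemma cfs_maximal m n : cfs G m -> cfs G n -> (forall x, m x -> n x) -> m = n.
Proof.
move=> [_ _ mmax _] [n2 n1 _ _] mn; apply: pred_ext => x; split; first exact: mn.
by case: (mmax n n2 mn) => [/(_ x)|/n1].
Qed.

Lemma cfs_comaximal m n : cfs G m -> cfs G n -> m <> n ->
  exists a b, [/\ m a, n b & 1 = a + b].
Proof.
move=> hm hn mn; pose J := fun y => exists a b, [/\ m a, n b & y = a + b].
have mJ : two_ideal G J.
  apply: two_idealP.
  - by move=> x [a [b [ha hb ->]]]; apply: subalgD; [apply: (cfs_sub hm) | apply: (cfs_sub hn)].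
  - exact: lsub_add (cfs_lsub hm) (cfs_lsub hn).
  - move=> g x hg [a [b [ha hb ->]]]; exists (a * g), (b * g); rewrite mulrDl.
    by split=> //; apply: two_idealMr => //; apply: cfs_two_ideal.
have nJ x : n x -> J x.
  by move=> hx; exists 0, x; rewrite add0r; split=> //; apply: lsub0 (cfs_lsub hm).
case: (hn) => _ _ nmax _; case: (nmax J mJ nJ) => [Jn|//].
case: mn; apply: cfs_maximal => // x hx.
by apply: Jn; exists x, 0; rewrite addr0; split=> //; apply: lsub0 (cfs_lsub hn).
Qed.


Lemma prodset0 n : prodset n 0 1.
Proof. by exists (fun _ => 0); split; [case | rewrite big_ord0]. Qed.

Lemma prodset0E n p : prodset n 0 p -> p = 1.
Proof. by case=> q [_ ->]; rewrite big_ord0. Qed.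

Lemma prodsetSl n j x : prodset n j.+1 x <-> exists a p, [/\ n a, prodset n j p & x = a * p].
Proof.
split=> [[q [hq ->]]|[a [p [ha [q [hq ->]] ->]]]].
  rewrite big_ord_recl; exists (q ord0), (\prod_(i < j) q (lift ord0 i)).
  by split=> //; exists (fun i => q (lift ord0 i)).
exists (fun i : 'I_j.+1 => if unlift ord0 i is Some k then q k else a); split.
  by move=> i; case: (unlift ord0 i).
by rewrite big_ord_recl unlift_none; congr (_ * _); apply: eq_bigr => i _; rewrite liftK.
Qed.

Lemma prodsetSr n j x : prodset n j.+1 x <-> exists a p, [/\ n a, prodset n j p & x = p * a].
Proof.
have widen_lift (i : 'I_j) : widen_ord (leqnSn j) i = lift ord_max i.
  by apply: ord_inj; rewrite lift_max.
split=> [[q [hq ->]]|[a [p [ha [q [hq ->]] ->]]]].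
  rewrite big_ord_recr; exists (q ord_max), (\prod_(i < j) q (widen_ord (leqnSn j) i)).
  by split=> //; exists (fun i => q (widen_ord (leqnSn j) i)).
exists (fun i : 'I_j.+1 => if unlift ord_max i is Some k then q k else a); split.
  by move=> i; case: (unlift ord_max i).
rewrite big_ord_recr unlift_none; congr (_ * _); apply: eq_bigr => i _.
by rewrite widen_lift liftK.
Qed.

Lemma prodsetD n a b p : prodset n (a + b) p ->
  exists q p', [/\ prodset n a q, prodset n b p' & p = q * p'].
Proof.
elim: a p => [|a IH] p; first by exists 1, p; rewrite mul1r; split=> //; apply: prodset0.
rewrite addSn => /prodsetSl [e [p1 [he /IH [q1 [p' [hq1 hp' ->]]] ->]]].
by exists (e * q1), p'; rewrite mulrA; split=> //; apply/prodsetSl; exists e, q1.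
Qed.

Lemma prodset_sub n j x : two_ideal G n -> prodset n j x -> G x.
Proof.
move=> tn; elim: j x => [x /prodset0E ->|j IH x]; first exact: subalg1.
by case/prodsetSl=> a [p [ha hp ->]]; apply: subalgM (two_ideal_sub tn ha) (IH _ hp).
Qed.

Lemma prodsetMr n j p g : two_ideal G n -> prodset n j.+1 p -> G g -> prodset n j.+1 (p * g).
Proof.
move=> tn /prodsetSr [a [q [ha hq ->]]] hg; apply/prodsetSr.
exists (a * g), q; rewrite mulrA; split=> //.
exact: (two_idealMr tn hg ha).
Qed.

Definition idealX n j u :=
  exists r (p : 'I_r -> A), (forall i, prodset n j (p i)) /\ u = \sum_(i < r) p i.

Lemma idealX0 n : idealX n 0 1.
Proof. by exists 1%N, (fun _ => 1); rewrite big_ord1; split=> // i; apply: prodset0. Qed.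

Lemma idealXMr n j u a : idealX n j u -> n a -> idealX n j.+1 (u * a).
Proof.
case=> r [p [hp ->]] ha; exists r, (fun i => p i * a); rewrite mulr_suml.
by split=> // i; apply/prodsetSr; exists a, (p i).
Qed.

Lemma idealX_sub n j u : two_ideal G n -> idealX n j u -> G u.
Proof.
move=> tn [r [p [hp ->]]]; apply: (subspace_sum subalg_subspace) => i.
exact: prodset_sub tn (hp i).
Qed.

Definition killed n j L y := forall p, prodset n j p -> L (p * y).

Lemma killed_idealX n j L y u : lsub G L -> killed n j L y -> idealX n j u -> L (u * y).
Proof. by move=> lL ky [r [p [hp ->]]]; rewrite mulr_suml; apply: lsub_sum => // i; apply: ky. Qed.

Lemma killed_le n j j' L y : lsub G L -> two_ideal G n -> (j <= j')%N ->
  killed n j L y -> killed n j' L y.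
Proof.
move=> lL tn le_jj' ky p; rewrite -(subnK le_jj') => /prodsetD [q [p' [hq hp' ->]]].
by rewrite -mulrA; apply: (lsubM lL _ (ky _ hp')); apply: prodset_sub tn hq.
Qed.

Lemma killedMl n j L g y : two_ideal G n -> lsub G L -> G g -> killed n j L y ->
  killed n j L (g * y).
Proof.
move=> tn lL hg; case: j => [|j] ky p hp.
  by rewrite (prodset0E hp) mul1r; apply: lsubM => //; rewrite -[y]mul1r; apply/ky/prodset0.
by rewrite mulrA; apply/ky/prodsetMr.
Qed.

Lemma in_VnD n L y y' : lsub G L -> two_ideal G n -> in_Vn n L y -> in_Vn n L y' ->
  in_Vn n L (y + y').
Proof.
move=> lL tn [j ky] [j' ky'].
exists (maxn j j') => p hp; rewrite mulrDr; apply: lsubD => //.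
  exact: (killed_le lL tn (leq_maxl j j') ky).
exact: (killed_le lL tn (leq_maxr j j') ky').
Qed.

Lemma comaximal_idealX n J : two_ideal G n -> two_ideal G J ->
  (exists a b, [/\ n a, J b & 1 = a + b]) ->
  forall j, exists u v, [/\ idealX n j u, J v & 1 = u + v].
Proof.
move=> tn tJ [a [b [ha hb hab]]].
have lJ := two_ideal_lsub tJ.
elim=> [|j [u [v [hu hv huv]]]].
  by exists 1, 0; rewrite addr0; split=> //; [apply: idealX0 | apply: lsub0 lJ].
exists (u * a), (u * b + (v * a + v * b)); split; first exact: idealXMr.
  apply: (lsubD lJ); first exact: (lsubM lJ (idealX_sub tn hu) hb).
  apply: (lsubD lJ); first exact: (two_idealMr tJ (two_ideal_sub tn ha) hv).
  exact: (two_idealMr tJ (two_ideal_sub tJ hb) hv).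
by rewrite addrA -mulrDr -mulrDr -hab !mulr1 -huv.
Qed.

Definition sums2 (S : A -> A -> Prop) (F : A -> A -> A) x :=
  exists r (c p : 'I_r -> A), (forall i, S (c i) (p i)) /\ x = \sum_(i < r) F (c i) (p i).

Lemma sums2_1 S F c p : S c p -> sums2 S F (F c p).
Proof. by exists 1%N, (fun _ => c), (fun _ => p); rewrite big_ord1. Qed.

Lemma sums2_lsub S F : (forall g c p, G g -> S c p -> S (g * c) p) ->
  (forall g c p, F (g * c) p = g * F c p) -> lsub G (sums2 S F).
Proof.
move=> SM FM; split.
- by exists 0%N, (fun _ => 0), (fun _ => 0); split; [case | rewrite big_ord0].
- move=> x y [r1 [c1 [p1 [h1 ->]]]] [r2 [c2 [p2 [h2 ->]]]].
  pose cat (f1 : 'I_r1 -> A) (f2 : 'I_r2 -> A) k :=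
    match split k with inl i => f1 i | inr j => f2 j end.
  exists (r1 + r2)%N, (cat c1 c2), (cat p1 p2); split.
    by move=> k; rewrite /cat; case: (split k).
  rewrite big_split_ord /cat; congr (_ + _); apply: eq_bigr => i _.
    by rewrite -[lshift r2 i]/(unsplit (inl i)) unsplitK.
  by rewrite -[rshift r1 i]/(unsplit (inr i)) unsplitK.
- move=> g x hg [r [c [p [hcp ->]]]]; exists r, (fun i => g * c i), p; split.
    by move=> i; apply: SM.
  by rewrite mulr_sumr; apply: eq_bigr => i _; rewrite FM.
Qed.

Lemma AmPow_lsub m k : lsub G (AmPow m k).
Proof. by apply: (@sums2_lsub (fun _ p => prodset m k p) *%R) => // *; rewrite mulrA. Qed.

Lemma AmPow_prodset m k c p : prodset m k p -> AmPow m k (c * p).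
Proof. exact: (@sums2_1 (fun _ p => prodset m k p) *%R). Qed.

Lemma GaG_lsub a : lsub G (GaG G a).
Proof.
apply: (@sums2_lsub (fun g h => G g /\ G h) (fun g h => g * a * h)) => [g c p hg [hc hp]|*].
  by split=> //; apply: subalgM.
by rewrite !mulrA.
Qed.

Lemma Gam_lsub a m : lsub G (Gam G a m).
Proof.
apply: (@sums2_lsub (fun g h => G g /\ m h) (fun g h => g * a * h)) => [g c p hg [hc hp]|*].
  by split=> //; apply: subalgM.
by rewrite !mulrA.
Qed.

Definition Gpow m k := sums2 (fun c p => G c /\ prodset m k p) *%R.

Lemma Gpow_lsub m k : lsub G (Gpow m k).
Proof.
apply: sums2_lsub => [g c p hg [hc hp]|*]; last by rewrite mulrA.
by split=> //; apply: subalgM.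
Qed.

(** * Annihilators of simple subquotients *)

Definition ann Q N g := G g /\ forall y, N y -> Q (g * y).

Lemma ann_two_ideal Q N : lsub G Q -> lsub G N -> two_ideal G (ann Q N).
Proof.
move=> lQ lN; apply: two_idealP; first by move=> x [].
  split.
  - by split=> [|y _]; [apply: subalg0 | rewrite mul0r; apply: lsub0 lQ].
  - move=> x y [hx Qx] [hy Qy]; split=> [|z hz]; first exact: subalgD.
    by rewrite mulrDl; apply: lsubD lQ (Qx _ hz) (Qy _ hz).
  - move=> g x hg [hx Qx]; split=> [|z hz]; first exact: subalgM.
    by rewrite -mulrA; apply: lsubM lQ hg (Qx _ hz).
move=> g x hg [hx Qx]; split=> [|z hz]; first exact: subalgM.
by rewrite -mulrA; apply: Qx; apply: lsubM.
Qed.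

Lemma simple_cyclic Q N t : lsub G Q -> lsub G N -> simple_pq G Q N -> N t -> ~ Q t ->
  forall y, N y -> exists g, G g /\ eqmod Q y (g * t).
Proof.
move=> lQ lN [QN _ Nsimple] Nt Qt; have sQ := lsub_subspace lQ.
pose N' y := exists g, G g /\ eqmod Q y (g * t).
have lN' : lsub G N'.
  split.
  - by exists 0; rewrite mul0r; split; [apply: subalg0 | apply: eqmod_refl].
  - move=> x y [g [hg hx]] [g' [hg' hy]]; exists (g + g'); rewrite mulrDl.
    by split; [apply: subalgD | apply: eqmodD].
  - move=> g x hg [g' [hg' hx]]; exists (g * g'); rewrite -mulrA.
    by split; [apply: subalgM | apply: eqmod_lsubM].
have QN' x : Q x -> N' x.
  by move=> hx; exists 0; rewrite mul0r /eqmod subr0; split=> //; apply: subalg0.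
have N'N x : N' x -> N x.
  case=> g [hg hx]; rewrite -(subrK (g * t) x); apply: lsubD (QN _ hx) _ => //.
  exact: lsubM.
case: (Nsimple N' lN' QN' N'N) => [/(_ t) Q't|//]; case: Qt; apply: Q't.
by exists 1; rewrite mul1r; split; [apply: subalg1 | apply: eqmod_refl].
Qed.

Lemma ideal_fixes Q N J : lsub G Q -> lsub G N -> simple_pq G Q N -> two_ideal G J ->
  (exists g0 y0, [/\ J g0, N y0 & ~ Q (g0 * y0)]) ->
  forall t, N t -> exists f, J f /\ eqmod Q (f * t) t.
Proof.
move=> lQ lN Nsimple tJ [g0 [y0 [Jg0 Ny0 Qg0y0]]] t Nt.
have [sQ lJ] := (lsub_subspace lQ, two_ideal_lsub tJ).
have [QN _ Nsimple'] := Nsimple.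
have [Qt|Qt] := classic (Q t).
  by exists 0; rewrite mul0r /eqmod sub0r; split; [apply: lsub0 lJ | apply: subspaceN].
pose N' y := exists j q, [/\ J j, Q q & y = j * t + q].
have lN' : lsub G N'.
  split.
  - by exists 0, 0; rewrite mul0r addr0; split=> //; apply: lsub0.
  - move=> x y [j [q [hj hq ->]]] [j' [q' [hj' hq' ->]]].
    by exists (j + j'), (q + q'); rewrite mulrDl addrACA; split=> //; apply: lsubD.
  - move=> g x hg [j [q [hj hq ->]]].
    by exists (g * j), (g * q); rewrite mulrDr mulrA; split=> //; apply: lsubM.
have QN' x : Q x -> N' x by exists 0, x; rewrite mul0r add0r; split=> //; apply: lsub0.
have N'N x : N' x -> N x.
  case=> j [q [hj hq ->]]; apply: lsubD (QN _ hq) => //.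
  by apply: lsubM => //; apply: two_ideal_sub hj.
case: (Nsimple' N' lN' QN' N'N) => [N'Q|/(_ t Nt) [j [q [hj hq tE]]]].
  case: Qg0y0; have [g [hg y0E]] := simple_cyclic lQ lN Nsimple Nt Qt Ny0.
  apply: (eqmod_mem sQ (eqmod_lsubM lQ (two_ideal_sub tJ Jg0) y0E)).
  rewrite mulrA; apply: N'Q; exists (g0 * g), 0; rewrite addr0.
  by split=> //; [apply: two_idealMr | apply: lsub0].
exists j; split=> //; rewrite /eqmod {2}tE opprD addrA subrr sub0r.
exact: subspaceN.
Qed.

Lemma ideal_fixes_list Q N J s : lsub G Q -> lsub G N -> simple_pq G Q N -> two_ideal G J ->
  (exists g0 y0, [/\ J g0, N y0 & ~ Q (g0 * y0)]) -> {in s, forall t, N t} ->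
  exists e, J e /\ {in s, forall t, eqmod Q (e * t) t}.
Proof.
move=> lQ lN Nsimple tJ Jnann; have [sQ lJ] := (lsub_subspace lQ, two_ideal_lsub tJ).
elim: s => [_|t s IH /forall_in_cons [Nt /IH [e [Je efix]]]].
  by exists 0; split=> //; apply: lsub0 lJ.
have eG := two_ideal_sub tJ Je.
have [f [Jf ffix]] := ideal_fixes lQ lN Nsimple tJ Jnann (lsubB lN Nt (lsubM lN eG Nt)).
have e'E x : (e + f - f * e) * x = e * x + f * (x - e * x).
  by rewrite mulrBr mulrBl mulrDl mulrA addrA.
(* [e + f - f e] still fixes [s] modulo [Q] and fixes [t] as well. *)
exists (e + f - f * e); split.
  by apply: lsubB lJ (lsubD lJ Je Jf) (two_idealMr tJ eG Jf).
apply/forall_in_cons; split.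
  rewrite e'E; apply: (eqmod_trans sQ (eqmodD sQ (eqmod_refl sQ (e * t)) ffix)).
  by rewrite addrC subrK; apply: eqmod_refl.
move=> x /efix ex; rewrite e'E.
have fQ : eqmod Q (f * (x - e * x)) 0.
  by rewrite /eqmod subr0; apply: lsubM lQ (two_ideal_sub tJ Jf) (eqmod_sym sQ ex).
by apply: (eqmod_trans sQ (eqmodD sQ ex fQ)); rewrite addr0; apply: eqmod_refl.
Qed.

Lemma ann_maximal Q N J : lsub G Q -> lsub G N -> simple_pq G Q N -> findim_mod Q N ->
  two_ideal G J -> (forall x, ann Q N x -> J x) -> (forall x, J x -> ann Q N x) \/ J 1.
Proof.
move=> lQ lN Nsimple [s0 hs0] tJ annJ; have [sQ lJ] := (lsub_subspace lQ, two_ideal_lsub tJ).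
have [Jann|Jnann] := classic (forall x, J x -> ann Q N x); [by left | right].
have {}Jnann : exists g0 y0, [/\ J g0, N y0 & ~ Q (g0 * y0)].
  apply: NNPP => h; apply: Jnann => g Jg; split=> [|y Ny]; first exact: two_ideal_sub Jg.
  by apply: NNPP => Qgy; apply: h; exists g, y.
have [s [sN _ hs]] := spans_mod_within sQ (lsub_subspace lN) hs0.
have [e [Je efix]] := ideal_fixes_list lQ lN Nsimple tJ Jnann sN.
have eG := two_ideal_sub tJ Je.
have efixN y : N y -> eqmod Q (e * y) y.
  move=> Ny; have [z [[c zE] yz]] := hs y Ny.
  apply: (eqmod_trans sQ (y := e * z)); first by rewrite /eqmod -mulrBr; apply: lsubM.
  apply: (eqmod_trans sQ _ (eqmod_sym sQ yz)).
  rewrite zE mulr_sumr; apply: (eqmod_sum sQ) => i; rewrite -scalerAr.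
  by apply: (eqmodZ sQ); apply/efix/mem_nth.
(* [e] acts as the identity on [N/Q], so [1 - e] annihilates it. *)
have J1e : J (1 - e).
  apply: annJ; split=> [|y Ny]; first exact: subalgB (subalg1) eG.
  by rewrite mulrBl mul1r; apply: (eqmod_sym sQ (efixN y Ny)).
by rewrite -(subrK e 1); apply: lsubD lJ J1e Je.
Qed.

Definition ann_seq Q s g := G g /\ {in s, forall t, Q (g * t)}.

Lemma ann_seq_findim Q N s : lsub G Q -> lsub G N -> findim_mod Q N -> {in s, forall t, N t} ->
  findim_mod (ann_seq Q s) G.
Proof.
move=> lQ lN fdN; have sQ := lsub_subspace lQ.
have sann_seq (s0 : seq A) : subspace (ann_seq Q s0).
  split.
  - by split=> [|x _]; [apply: subalg0 | rewrite mul0r; apply: subspace0 sQ].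
  - move=> x y [Gx Qx] [Gy Qy]; split=> [|z hz]; first exact: subalgD.
    by rewrite mulrDl; apply: (subspaceD sQ (Qx _ hz) (Qy _ hz)).
  - move=> c x [Gx Qx]; split=> [|z hz]; first exact: subalgZ.
    by rewrite -scalerAl; apply: (subspaceZ sQ _ (Qx _ hz)).
elim: s => [_|a s IH /forall_in_cons [Na /IH fdIs]].
  by exists [::] => x Gx; exists 0; split; [apply: kspan0 | rewrite /eqmod subr0].
(* [g |-> g * a] embeds [ann_seq Q s / ann_seq Q (a :: s)] into [N/Q]. *)
apply: findim_mod_trans fdIs _.
apply: (@findim_mod_kernel _ _ _ (a \o* idfun) _ _ Q N) => //= [g [Gg _]|g [Gg Qgs] Qga].
  exact: lsubM.
by split=> //; apply/forall_in_cons.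
Qed.

Lemma ann_cfs Q N : lsub G Q -> lsub G N -> simple_pq G Q N -> findim_mod Q N ->
  cfs G (ann Q N).
Proof.
move=> lQ lN Nsimple fdN; have tann := ann_two_ideal lQ lN.
split=> //.
- case: Nsimple => _ [x [Nx Qx]] _ [_ /(_ x Nx)]; by rewrite mul1r.
- by move=> J tJ annJ; apply: ann_maximal.
have [s0 hs0] := fdN.
have [s [sN _ hs]] := spans_mod_within (lsub_subspace lQ) (lsub_subspace lN) hs0.
have [t0 ht0] : findim_mod (ann Q N) G.
  have [t ht] := ann_seq_findim lQ lN fdN sN; exists t; apply: (spans_mod_sub ht) => // g [Gg Qgs].
  split=> // y /hs [z [[c ->] yz]]; rewrite -(subrK (\sum_(i < size s) c i *: s`_i) y) mulrDr.
  apply: (lsubD lQ (lsubM lQ Gg yz)); rewrite mulr_sumr; apply: (lsub_sum lQ) => i.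
  by rewrite -scalerAr; apply/(subspaceZ (lsub_subspace lQ))/Qgs/mem_nth.
have [t [tG _ ht]] := spans_mod_within (lsub_subspace (two_ideal_lsub tann)) subalg_subspace ht0.
exists t; split=> [i|g /ht [z [[c ->] gz]]]; first exact/tG/mem_nth.
by exists c.
Qed.

(** * Splitting extensions *)

(* [W/Q] is a complement of [N/Q] in [R/Q]. *)
Definition is_complement Q N R W :=
  [/\ lsub G W, (forall x, Q x -> W x), (forall x, W x -> R x),
      (forall x, W x -> N x -> Q x) & (forall y, R y -> exists w u, [/\ W w, N u & y = w + u])].

Section Extension.
Variables (Q U P : A -> Prop) (b c : seq A).
Hypotheses (lQ : lsub G Q) (lU : lsub G U) (lP : lsub G P).
Hypotheses (QU : forall x, Q x -> U x) (UP : forall x, U x -> P x).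
Hypotheses (bU : {in b, forall x, U x}) (bspan : spans_mod b Q U)
  (bmin : forall t, spans_mod t Q U -> (size b <= size t)%N).
Hypotheses (cP : {in c, forall x, P x}) (cspan : spans_mod c U P)
  (cmin : forall t, spans_mod t U P -> (size c <= size t)%N).

Let sQ := lsub_subspace lQ.
Let sU := lsub_subspace lU.

Local Notation d := (size b + size c)%N.

(* [P/Q] is identified with ['rV_d] through the bases [b] of [U/Q] and [c] of
   [P/U]; the submodule [U/Q] becomes the subspace [Urow]. *)
Definition of_row (v : 'rV[K]_d) : A :=
  \sum_(i < size b) lsubmx v 0 i *: b`_i + \sum_(j < size c) rsubmx v 0 j *: c`_j.

Lemma of_rowD v w : of_row (v + w) = of_row v + of_row w.
Proof.
rewrite /of_row addrACA -!big_split /=; congr (_ + _); apply: eq_bigr => i _;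
by rewrite linearD !mxE scalerDl.
Qed.

Lemma of_rowZ (k : K) v : of_row (k *: v) = k *: of_row v.
Proof.
rewrite /of_row scalerDr !scaler_sumr; congr (_ + _); apply: eq_bigr => i _;
by rewrite linearZ !mxE scalerA.
Qed.

Lemma of_row0 : of_row 0 = 0.
Proof. by rewrite -(scale0r (0 : 'rV[K]_d)) of_rowZ scale0r. Qed.

Lemma of_rowB v w : of_row (v - w) = of_row v - of_row w.
Proof. by rewrite of_rowD -scaleN1r of_rowZ scaleN1r. Qed.

Lemma of_row_sum (I : Type) (r : seq I) (F : I -> 'rV[K]_d) :
  of_row (\sum_(i <- r) F i) = \sum_(i <- r) of_row (F i).
Proof. exact: (big_morph of_row of_rowD of_row0). Qed.

Lemma of_row_P v : P (of_row v).
Proof.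
by apply: (lsubD lP); apply: (lsub_sum lP) => i; apply: (subspaceZ (lsub_subspace lP));
  [apply/UP/bU/mem_nth | apply/cP/mem_nth].
Qed.

Lemma of_row_U v : U (of_row v) <-> rsubmx v = 0.
Proof.
have bsumU (x : 'rV[K]_(size b)) : U (\sum_(i < size b) x 0 i *: b`_i).
  by apply: (lsub_sum lU) => i; apply: (subspaceZ sU); apply/bU/mem_nth.
split=> [Uv|v0]; last first.
  rewrite /of_row v0 [X in _ + X]big1 ?addr0 => [|i _]; first exact: bsumU.
  by rewrite mxE scale0r.
apply/rowP => j; rewrite [RHS]mxE; apply: (minimal_spans_free sU cspan cmin).
by move: (lsubB lU Uv (bsumU (lsubmx v))); rewrite /of_row [X in X - _]addrC addrK.
Qed.

Lemma of_row_Q v : Q (of_row v) -> v = 0.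
Proof.
move=> Qv; have vr : rsubmx v = 0 by apply/of_row_U/QU.
have vl : lsubmx v = 0.
  apply/rowP => j; rewrite [RHS]mxE; apply: (minimal_spans_free sQ bspan bmin).
  by move: Qv; rewrite /of_row vr [X in _ + X]big1 ?addr0 // => i _; rewrite mxE scale0r.
by rewrite -(hsubmxK v) vl vr row_mx0.
Qed.

Lemma of_row_inj v w : eqmod Q (of_row v) (of_row w) -> v = w.
Proof. by rewrite /eqmod -of_rowB => /of_row_Q /eqP; rewrite subr_eq0 => /eqP. Qed.

Lemma of_row_onto y : P y -> exists v, eqmod Q y (of_row v).
Proof.
move=> Py; have [z [[gm zE] yz]] := cspan Py; have [zb [[bt zbE] q]] := bspan yz.
exists (row_mx (\row_i bt i) (\row_j gm j)); rewrite /of_row row_mxKl row_mxKr.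
have -> : \sum_(i < size b) (\row_i bt i) 0 i *: b`_i = zb.
  by rewrite zbE; apply: eq_bigr => i _; rewrite mxE.
have -> : \sum_(j < size c) (\row_j gm j) 0 j *: c`_j = z.
  by rewrite zE; apply: eq_bigr => j _; rewrite mxE.
by rewrite /eqmod opprD addrA addrAC.
Qed.

Definition coord y : 'rV[K]_d :=
  if excluded_middle_informative (exists v, eqmod Q y (of_row v)) is left h
  then proj1_sig (constructive_indefinite_description _ h) else 0.

Lemma coordP y : P y -> eqmod Q y (of_row (coord y)).
Proof.
move=> Py; rewrite /coord; case: excluded_middle_informative => [h|[]].
  exact: (proj2_sig (constructive_indefinite_description _ h)).
exact: of_row_onto.
Qed.

Definition act (g : A) : 'End('rV[K]_d) :=
  linfun (mulmxr (\matrix_(k < d) coord (g * of_row 'e_k))).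

Lemma act_spec g v : G g -> eqmod Q (of_row (act g v)) (g * of_row v).
Proof.
move=> Gg; rewrite lfunE /= mulmx_sum_row of_row_sum {2}(row_sum_delta v) of_row_sum.
rewrite mulr_sumr; apply: (eqmod_sum sQ) => k; rewrite !of_rowZ rowK -scalerAr.
by apply/(eqmodZ sQ)/(eqmod_sym sQ)/coordP; apply/(lsubM lP)/of_row_P.
Qed.

Lemma act_unique g v w : G g -> eqmod Q (of_row w) (g * of_row v) -> act g v = w.
Proof.
by move=> Gg h; apply/of_row_inj/(eqmod_trans sQ (act_spec v Gg))/(eqmod_sym sQ).
Qed.

Lemma act_Gmod : is_Gmod G act.
Proof.
split.
- apply/lfunP => v; rewrite id_lfunE; apply: act_unique; first exact: subalg1.
  by rewrite mul1r; apply: eqmod_refl.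
- move=> x y Gx Gy; apply/lfunP => v; rewrite comp_lfunE.
  apply: act_unique; first exact: subalgM.
  apply: (eqmod_trans sQ (act_spec _ Gx)); rewrite -mulrA.
  exact: (eqmod_lsubM lQ Gx (act_spec _ Gy)).
- move=> x y Gx Gy; apply/lfunP => v; rewrite add_lfunE.
  apply: act_unique; first exact: subalgD.
  by rewrite of_rowD mulrDl; apply: (eqmodD sQ); apply: act_spec.
- move=> k x Gx; apply/lfunP => v; rewrite scale_lfunE.
  apply: act_unique; first exact: subalgZ.
  by rewrite of_rowZ -scalerAl; apply: (eqmodZ sQ); apply: act_spec.
Qed.

Definition Urow : {vspace 'rV[K]_d} := lker (linfun (mulmxr (col_mx 0 1%:M : 'M_(d, size c)))).

Lemma Urow_U v : v \in Urow <-> U (of_row v).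
Proof.
rewrite memv_ker lfunE /= -{1}(hsubmxK v) mul_row_col mulmx0 mulmx1 add0r of_row_U.
by split=> /eqP.
Qed.

Lemma eqmod_QU x y : eqmod Q x y -> U y -> U x.
Proof. by move=> h Uy; apply: (eqmod_mem sU _ Uy); apply: QU. Qed.

Lemma Urow_submod : Gsubmod G act Urow.
Proof.
move=> g Gg; apply/subvP => w /memv_imgP [v /Urow_U Uv ->]; apply/Urow_U.
by apply: (eqmod_QU (act_spec v Gg)); apply: lsubM.
Qed.

Definition of_vspace (W : {vspace 'rV[K]_d}) y := exists v, v \in W /\ eqmod Q y (of_row v).

Lemma of_vspace_lsub W : Gsubmod G act W -> lsub G (of_vspace W).
Proof.
move=> sW; split.
- by exists 0; rewrite mem0v of_row0; split=> //; apply: eqmod_refl.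
- move=> x y [v [hv hx]] [w [hw hy]]; exists (v + w); rewrite of_rowD.
  by split; [apply: memvD | apply: eqmodD].
- move=> g x Gg [v [hv hx]]; exists (act g v); split; first exact/(subvP (sW g Gg))/memv_img.
  exact: (eqmod_trans sQ (eqmod_lsubM lQ Gg hx) (eqmod_sym sQ (act_spec _ Gg))).
Qed.

Lemma of_vspace_Q W x : Q x -> of_vspace W x.
Proof.
by exists 0; rewrite mem0v of_row0 /eqmod subr0.
Qed.

Lemma of_vspace_P W x : of_vspace W x -> P x.
Proof.
case=> v [_ hx]; rewrite -(subrK (of_row v) x); apply: (lsubD lP); last exact: of_row_P.
by apply/UP/QU.
Qed.

Lemma of_vspace_row W v : of_vspace W (of_row v) -> v \in W.
Proof. by case=> w [hw /of_row_inj ->]. Qed.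

Lemma Urow_bottom (n0 : A -> Prop) : simple_pq G Q U -> (forall x, n0 x -> G x) ->
  (forall x y, n0 x -> U y -> Q (x * y)) -> simple_sq_ann G act n0 0%VS Urow.
Proof.
move=> [_ [xU [UxU QxU]] Usimple] n0G n0U; split.
- exact: sub0v.
- apply/subvPn; have [v hv] := of_row_onto (UP UxU).
  exists v; first exact/Urow_U/(eqmod_QU (eqmod_sym sQ hv)).
  rewrite memv0; apply/eqP => v0; apply: QxU.
  by apply: (eqmod_mem sQ hv); rewrite v0 of_row0; apply: subspace0.
- move=> W sW _ WU.
  case: (Usimple (of_vspace W) (of_vspace_lsub sW) (fun x => @of_vspace_Q W x)).
  + move=> y [v [hv hy]]; apply: (eqmod_QU hy); apply/Urow_U.
    exact: (subvP WU).
  + move=> h; left; apply/subvP => v hv; rewrite memv0; apply/eqP.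
    by apply/of_row_Q/h; exists v; split=> //; apply: eqmod_refl.
  + by move=> h; right; apply/subvP => v /Urow_U /h /of_vspace_row.
- move=> x hx; apply/subvP => w /memv_imgP [v /Urow_U Uv ->]; rewrite memv0; apply/eqP.
  by apply/of_row_Q/(eqmod_mem sQ (act_spec v (n0G x hx)))/n0U.
Qed.

Lemma Urow_top (nt : A -> Prop) : simple_pq G U P -> (forall x, nt x -> G x) ->
  (forall x y, nt x -> P y -> U (x * y)) -> simple_sq_ann G act nt Urow fullv.
Proof.
move=> [_ [xP [PxP UxP]] Psimple] ntG ntP; split.
- exact: subvf.
- apply/subvPn; have [v hv] := of_row_onto PxP.
  by exists v; [apply: memvf | apply/negP => /Urow_U Uv; apply/UxP/(eqmod_QU hv)].
- move=> W sW UW _.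
  have UW' y : U y -> of_vspace W y.
    move=> Uy; have [v hv] := of_row_onto (UP Uy).
    exists v; split=> //; apply/(subvP UW)/Urow_U.
    exact: (eqmod_QU (eqmod_sym sQ hv)).
  case: (Psimple (of_vspace W) (of_vspace_lsub sW) UW' (fun x => @of_vspace_P W x)) => h.
    left; apply/subvP => v hv; apply/Urow_U/h.
    by exists v; split=> //; apply: eqmod_refl.
  by right; apply/subvP => v _; apply/of_vspace_row/h/of_row_P.
- move=> x hx; apply/subvP => w /memv_imgP [v _ ->]; apply/Urow_U.
  by apply: (eqmod_QU (act_spec v (ntG x hx))); apply/ntP/of_row_P.
Qed.

Lemma extension_split_rows (n0 nt : A -> Prop) :
  simple_pq G Q U -> simple_pq G U P -> (forall x, n0 x -> G x) -> (forall x, nt x -> G x) ->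
  (forall x y, n0 x -> U y -> Q (x * y)) -> (forall x y, nt x -> P y -> U (x * y)) ->
  Ext1_vanish G nt n0 -> exists W, is_complement Q U P W.
Proof.
move=> Usimple Psimple n0G ntG n0U ntP ext.
have [W [sW UW0 UWfull]] := ext _ act act_Gmod Urow Urow_submod
  (Urow_bottom Usimple n0G n0U) (Urow_top Psimple ntG ntP).
exists (of_vspace W); split.
- exact: of_vspace_lsub.
- by move=> x; apply: of_vspace_Q.
- by move=> x; apply: of_vspace_P.
- move=> y [v [hv hy]] Uy.
  have : v \in (Urow :&: W)%VS.
    by rewrite memv_cap hv andbT; apply/Urow_U/(eqmod_QU (eqmod_sym sQ hy)).
  rewrite UW0 memv0 => /eqP v0.
  by apply: (eqmod_mem sQ hy); rewrite v0 of_row0; apply: subspace0.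
move=> y Py; have [v hv] := of_row_onto Py.
have : v \in (Urow + W)%VS by rewrite UWfull memvf.
case/memv_addP => u hu [w hw vE].
exists (y - of_row u), (of_row u); split; last by rewrite subrK.
  by exists w; split=> //; move: hv; rewrite /eqmod vE of_rowD opprD addrA.
exact/Urow_U.
Qed.

End Extension.

Lemma extension_splits Q U P n0 nt : lsub G Q -> lsub G U -> lsub G P ->
  simple_pq G Q U -> simple_pq G U P -> findim_mod Q P ->
  (forall x y, n0 x -> U y -> Q (x * y)) -> (forall x y, nt x -> P y -> U (x * y)) ->
  cfs G n0 -> cfs G nt -> Ext1_vanish G nt n0 -> exists W, is_complement Q U P W.
Proof.
move=> lQ lU lP Usimple Psimple [s hs] n0U ntP n0cfs ntcfs ext.
have [[QU _ _] [UP _ _]] := (Usimple, Psimple).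
have [b [bU bspan bmin]] : exists b, [/\ {in b, forall x, U x}, spans_mod b Q U &
    forall t, spans_mod t Q U -> (size b <= size t)%N].
  apply: spans_mod_minimal; [exact: lsub_subspace | exact: lsub_subspace |].
  by exists s; apply: (spans_mod_sub hs).
have [c [cP cspan cmin]] : exists c, [/\ {in c, forall x, P x}, spans_mod c U P &
    forall t, spans_mod t U P -> (size c <= size t)%N].
  apply: spans_mod_minimal; [exact: lsub_subspace | exact: lsub_subspace |].
  by exists s; apply: (spans_mod_sub hs).
exact: (extension_split_rows lQ lU lP QU UP bU bspan bmin cP cspan cmin Usimple Psimple
  (fun x => cfs_sub n0cfs) (fun x => cfs_sub ntcfs) n0U ntP ext).
Qed.

(** * Block decomposition of finite-dimensional subquotients *)

(* A submodule above [N] of maximal codimension in [R] is simple over [N]. *)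
Lemma simple_above N R s : lsub G N -> lsub G R -> (forall x, N x -> R x) ->
  spans_mod s N R -> (exists x, R x /\ ~ N x) ->
  exists N', [/\ lsub G N', simple_pq G N N', (forall x, N' x -> R x) &
     exists s', (size s' < size s)%N /\ spans_mod s' N' R].
Proof.
move=> lN lR NR hs RnN.
pose above X := [/\ lsub G X, (forall x, N x -> X x), (forall x, X x -> R x) &
                    exists x, X x /\ ~ N x].
pose codim_ge k := exists X, above X /\ forall t, spans_mod t X R -> (k <= size t)%N.
have [k [[X [[lX NX XR [w [Xw Nw]]] Xk]] kmax]] :
    exists k, codim_ge k /\ forall k', codim_ge k' -> (k' <= k)%N.
  apply: (@classic_ex_maxn _ (size s)); first by exists 0%N, R; split=> //; split.
  by move=> k [X [[lX NX _ _] /(_ s) -> //]]; apply: (spans_mod_sub hs).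
have shrink Y x : lsub G Y -> (forall x, Y x -> X x) -> X x -> ~ Y x ->
    forall t, spans_mod t Y R -> exists t', (size t' < size t)%N /\ spans_mod t' X R.
  move=> lY YX Xx Yx t ht.
  exact: spans_mod_shrink (lsub_subspace lY) (lsub_subspace lX) YX ht (XR _ Xx) Xx Yx.
exists X; split=> //; last exact: shrink N w lN NX Xw Nw s hs.
split=> //; first by exists w.
move=> Y lY NY YX; have [YN|/not_subset_witness [y [Yy Ny]]] := classic (forall x, Y x -> N x).
  by left.
right; apply: NNPP => /not_subset_witness [x [Xx Yx]].
have : (k.+1 <= k)%N; last by rewrite ltnn.
apply: kmax; exists Y; split; first by split=> //; [move=> z /YX /XR | exists y].
move=> t /(shrink Y x lY YX Xx Yx) [t' [lt_t' /Xk le_k]].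
exact: leq_ltn_trans le_k lt_t'.
Qed.

Lemma simple_ind P (Phi : (A -> Prop) -> Prop) : lsub G P ->
  (forall Q, lsub G Q -> (forall x, Q x -> P x) -> (forall x, P x -> Q x) -> Phi Q) ->
  (forall Q N, lsub G Q -> lsub G N -> simple_pq G Q N -> (forall x, N x -> P x) ->
     findim_mod Q P -> Phi N -> Phi Q) ->
  forall Q, lsub G Q -> (forall x, Q x -> P x) -> findim_mod Q P -> Phi Q.
Proof.
move=> lP base step Q lQ QP [s hs].
suff : forall k Q, lsub G Q -> (forall x, Q x -> P x) ->
    (exists s, (size s <= k)%N /\ spans_mod s Q P) -> Phi Q.
  by apply=> //; exists s.
elim=> [|k IH] {lQ QP hs}Q lQ QP [{}s [sk hs]].
  by apply: base => //; apply: spans_mod_nil; move: sk; rewrite leqn0 => /nilP <-.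
have [PQ|/not_subset_witness PnQ] := classic (forall x, P x -> Q x); first exact: base.
have [N [lN Nsimple NP [s' [s's hs']]]] := simple_above lQ lP QP hs PnQ.
apply: (step Q N) => //; first by exists s.
by apply: IH => //; exists s'; split=> //; apply: leq_trans s's sk.
Qed.

Lemma simple_killed_pow Q N n j : lsub G Q -> lsub G N -> simple_pq G Q N ->
  findim_mod Q N -> cfs G n -> (forall y, N y -> killed n j Q y) ->
  forall x y, n x -> N y -> Q (x * y).
Proof.
move=> lQ lN Nsimple fdN ncfs kN.
have anncfs := ann_cfs lQ lN Nsimple fdN.
suff -> : n = ann Q N by move=> x y [_ h]; apply: h.
apply: NNPP => /(cfs_comaximal ncfs anncfs) nann.
have [u [v [nju annv uv]]] :=
  comaximal_idealX (cfs_two_ideal ncfs) (cfs_two_ideal anncfs) nann j.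
case: Nsimple => _ [y [Ny Qy]] _; apply: Qy.
rewrite -(mul1r y) uv mulrDl; apply: lsubD lQ (killed_idealX lQ (kN y Ny) nju) _.
by case: annv => _; apply.
Qed.

Lemma is_complement_self Q N R : (forall x, Q x -> N x) -> lsub G Q ->
  (forall y, R y -> N y) -> (forall x, Q x -> R x) -> is_complement Q N R Q.
Proof.
move=> QN lQ RN QR; split=> // y Ry.
by exists 0, y; rewrite add0r; split=> //; [apply: lsub0 lQ | apply: RN].
Qed.

Lemma complement_simple Q N N' W : lsub G Q -> lsub G N -> simple_pq G Q N ->
  (forall x, N x -> N' x) -> is_complement Q N N' W -> simple_pq G W N'.
Proof.
move=> lQ lN [QN [x [Nx Qx]] Nsimple] NN' [lW QW WN' WNQ N'WN].
split=> //; first by exists x; split=> [|Wx]; [apply: NN' | exact: Qx (WNQ _ Wx Nx)].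
move=> X lX WX XN'.
have lXN := lsubI lX lN.
case: (Nsimple _ lXN (fun x Qx => conj (WX _ (QW _ Qx)) (QN _ Qx)) (fun x h => h.2)) => h.
  left => y Xy; have [w [u [Ww Nu yE]]] := N'WN y (XN' y Xy).
  have uE : u = y - w by rewrite yE addrC addKr.
  have Xu : X u by rewrite uE; apply: lsubB lX Xy (WX _ Ww).
  by rewrite yE; apply: (lsubD lW Ww); apply/QW/h.
right => y /N'WN [w [u [Ww Nu ->]]].
by apply: lsubD lX (WX _ Ww) (h u Nu).1.
Qed.

Lemma complement_killed Q N N' W n0 : (forall x, n0 x -> G x) ->
  (forall x y, n0 x -> N y -> Q (x * y)) -> is_complement Q N N' W ->
  forall x y, n0 x -> N' y -> W (x * y).
Proof.
move=> n0G n0N [lW QW _ _ N'WN] x y n0x /N'WN [w [u [Ww Nu ->]]].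
by rewrite mulrDr; apply: lsubD lW (lsubM lW (n0G _ n0x) Ww) (QW _ (n0N _ _ n0x Nu)).
Qed.

Lemma is_complement_trans Q N N' W1 R W : lsub G N -> (forall x, N x -> N' x) ->
  is_complement Q N N' W1 -> is_complement W1 N' R W -> is_complement Q N R W.
Proof.
move=> lN NN' [lW1 QW1 W1N' W1NQ N'W1N] [lW W1W WR WN'W1 RWN'].
split=> //; first by move=> x /QW1 /W1W.
  by move=> x Wx Nx; apply: (W1NQ _ _ Nx); apply: WN'W1 Wx (NN' _ Nx).
move=> y /RWN' [w [u' [Ww N'u' ->]]]; have [w1 [u [W1w1 Nu ->]]] := N'W1N u' N'u'.
by exists (w + w1), u; rewrite addrA; split=> //; apply: lsubD lW Ww (W1W _ W1w1).
Qed.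

Lemma complement_exists n0 n j Q N R : cfs G n0 -> cfs G n -> Ext1_vanish G n n0 ->
  lsub G Q -> lsub G N -> lsub G R -> simple_pq G Q N ->
  (forall x y, n0 x -> N y -> Q (x * y)) -> (forall x, N x -> R x) -> findim_mod Q R ->
  (forall y, R y -> killed n j N y) -> exists W, is_complement Q N R W.
Proof.
move=> n0cfs ncfs ext lQ lN lR Nsimple n0N NR fdR kR.
have [QN _ _] := Nsimple.
have fdNR : findim_mod N R by case: fdR => t ht; exists t; apply: (spans_mod_sub ht).
move: Q lQ Nsimple n0N fdR {QN}; pattern N; move: N lN NR fdNR kR.
apply: (simple_ind lR) => [N lN NR RN _ Q lQ [QN _ _] _ _|
    N N' lN lN' N'simple N'R _ IH kR Q lQ Nsimple n0N fdR].
  by exists Q; apply: is_complement_self => // x /QN /NR.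
have [[QN _ _] [NN' _ _]] := (Nsimple, N'simple).
have fd X Y : (forall x, Q x -> X x) -> (forall x, Y x -> R x) -> findim_mod X Y.
  by move=> QX YR; case: fdR => t ht; exists t; apply: (spans_mod_sub ht).
have fdNN' : findim_mod N N' := fd _ _ QN N'R.
have nN' := simple_killed_pow lN lN' N'simple fdNN' ncfs (fun y N'y => kR y (N'R y N'y)).
have [W1 cW1] := extension_splits lQ lN lN' Nsimple N'simple (fd _ _ (fun x h => h) N'R)
  n0N nN' n0cfs ncfs ext.
have [lW1 QW1 _ _ _] := cW1.
have [W cW] := IH (fun z Rz p hp => NN' _ (kR z Rz p hp)) W1 lW1
  (complement_simple lQ lN Nsimple NN' cW1)
  (complement_killed (fun x => @cfs_sub n0 x n0cfs) n0N cW1) (fd _ _ QW1 (fun x h => h)).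
by exists W; apply: is_complement_trans lN NN' cW1 cW.
Qed.

Lemma cyclic_lsub z : lsub G (fun y => exists g, G g /\ y = g * z).
Proof.
split.
- by exists 0; rewrite mul0r; split=> //; apply: subalg0.
- move=> x y [g [Gg ->]] [h [Gh ->]].
  by exists (g + h); rewrite mulrDl; split=> //; apply: subalgD.
- by move=> g x Gg [h [Gh ->]]; exists (g * h); rewrite mulrA; split=> //; apply: subalgM.
Qed.

Lemma lift_to_block n0 n Q N P z : quasicommutative G -> cfs G n0 -> cfs G n ->
  lsub G Q -> lsub G N -> lsub G P -> simple_pq G Q N ->
  (forall x y, n0 x -> N y -> Q (x * y)) -> (forall x, N x -> P x) -> findim_mod Q P ->
  P z -> in_Vn n N z -> exists z', [/\ P z', N (z' - z) & in_Vn n Q z'].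
Proof.
move=> qcomm n0cfs ncfs lQ lN lP Nsimple n0N NP fdP Pz [j kz].
have [QN _ _] := Nsimple; have tn := cfs_two_ideal ncfs.
have [nn0|nn0] := classic (n = n0).
  exists z; rewrite subrr; split=> //; first exact: lsub0 lN.
  exists j.+1 => p /prodsetSl [e [p' [n0e p'j ->]]].
  by rewrite -mulrA; apply: n0N (kz _ p'j); rewrite -nn0.
(* A complement of [N/Q] in [(Γ z + N)/Q] contains the lift of [z]. *)
pose R := fun y => exists u v, [/\ exists g, G g /\ u = g * z, N v & y = u + v].
have lR : lsub G R := lsub_add (cyclic_lsub z) lN.
have NR x : N x -> R x.
  move=> Nx; exists 0, x; rewrite add0r; split=> //.
  by exists 0; rewrite mul0r; split=> //; apply: subalg0.
have RP x : R x -> P x.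
  by move=> [_ [v [[g [Gg ->]] Nv ->]]]; apply: lsubD lP (lsubM lP Gg Pz) (NP _ Nv).
have kR y : R y -> killed n j N y.
  move=> [_ [v [[g [Gg ->]] Nv ->]]] p hp; rewrite mulrDr.
  by apply: lsubD lN (killedMl tn lN Gg kz hp) (lsubM lN (prodset_sub tn hp) Nv).
have fdR : findim_mod Q R by case: fdP => s hs; exists s; apply: (spans_mod_sub hs).
have [W [lW QW WR WNQ RWN]] :=
  complement_exists n0cfs ncfs (qcomm _ _ ncfs n0cfs nn0) lQ lN lR Nsimple n0N NR fdR kR.
have Rz : R z.
  exists z, 0; rewrite addr0; split=> //; last exact: lsub0 lN.
  by exists 1; rewrite mul1r; split=> //; apply: subalg1.
have [w [u [Ww Nu zE]]] := RWN z Rz.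
exists w; split; first exact/RP/WR.
  by rewrite zE opprD addrA subrr sub0r; apply: lsubN lN Nu.
exists j => p hp; apply: WNQ; first exact: lsubM lW (prodset_sub tn hp) Ww.
have -> : w = z - u by rewrite zE addrK.
by rewrite mulrBr; apply: lsubB lN (kz _ hp) (lsubM lN (prodset_sub tn hp) Nu).
Qed.

Definition block_family Q P r (ns : 'I_r -> A -> Prop) (xs : 'I_r -> A) :=
  [/\ forall i, cfs G (ns i), injective ns, (forall i, in_Vn (ns i) Q (xs i)) &
      forall i, P (xs i)].

Lemma block_family_add Q P r ns xs n x : lsub G Q -> lsub G P -> block_family Q P ns xs ->
  cfs G n -> in_Vn n Q x -> P x ->
  exists r' (ns' : 'I_r' -> A -> Prop) xs', block_family Q P ns' xs' /\
     \sum_(i < r') xs' i = \sum_(i < r) xs i + x.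
Proof.
move=> lQ lP [nscfs nsinj Vxs Pxs] ncfs Vx Px.
have [[i0 nsi0]|nsn] := classic (exists i0, ns i0 = n).
  exists r, ns, (fun i => xs i + (if i == i0 then x else 0)); split.
    split=> // i; have [->|_] := eqVneq i i0; rewrite ?eqxx ?addr0 //.
    - by apply: in_VnD => //; [apply: cfs_two_ideal | rewrite nsi0].
    - exact: lsubD lP (Pxs i0) Px.
  rewrite big_split /=; congr (_ + _).
  by rewrite (bigD1 i0) //= eqxx big1 ?addr0 // => i /negbTE ->.
pose ns' i := if unlift ord0 i is Some k then ns k else n.
pose xs' i := if unlift ord0 i is Some k then xs k else x.
exists r.+1, ns', xs'; split; last first.
  rewrite big_ord_recl /xs' unlift_none addrC; congr (_ + _).
  by apply: eq_bigr => i _; rewrite liftK.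
split=> [i|i1 i2|i|i]; rewrite /ns' /xs'; try by case: (unlift ord0 i).
case: (unliftP ord0 i1) => [k1 ->|->]; case: (unliftP ord0 i2) => [k2 ->|->] //.
- by move/nsinj ->.
- by move=> nsk1; case: nsn; exists k1.
- by move=> nsk2; case: nsn; exists k2.
Qed.

Definition block_decomposable Q P y :=
  exists r (ns : 'I_r -> A -> Prop) xs, block_family Q P ns xs /\ Q (y - \sum_(i < r) xs i).

Lemma block_decomposition Q P : quasicommutative G -> lsub G Q -> lsub G P ->
  (forall x, Q x -> P x) -> findim_mod Q P -> forall y, P y -> block_decomposable Q P y.
Proof.
move=> qcomm lQ lP; move: Q lQ.
apply: (simple_ind lP (Phi := fun Q => forall y, P y -> block_decomposable Q P y)).
  move=> Q lQ _ PQ y Py; exists 0%N, (fun _ => Q), (fun _ => 0).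
  by rewrite big_ord0 subr0; split; [split; case | apply: PQ].
move=> Q N lQ lN Nsimple NP fdP IH y Py.
have fdQN : findim_mod Q N by case: fdP => s hs; exists s; apply: (spans_mod_sub hs).
have n0cfs := ann_cfs lQ lN Nsimple fdQN.
have n0N x' y' : ann Q N x' -> N y' -> Q (x' * y') by move=> [_ h]; apply: h.
have [r [ns [z [[nscfs nsinj Vz Pz] yz]]]] := IH y Py.
have lift i : exists z', [/\ P z', N (z' - z i) & in_Vn (ns i) Q z'].
  exact: (lift_to_block qcomm n0cfs (nscfs i) lQ lN lP Nsimple n0N NP fdP (Pz i) (Vz i)).
pose zf i := proj1_sig (constructive_indefinite_description _ (lift i)).
have [Pzf Nzfz Vzf] : [/\ forall i, P (zf i), forall i, N (zf i - z i) &
                            forall i, in_Vn (ns i) Q (zf i)].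
  by split=> i; case: (proj2_sig (constructive_indefinite_description _ (lift i))).
pose rem := y - \sum_(i < r) zf i.
have Nrem : N rem.
  rewrite /rem (_ : y - _ = (y - \sum_(i < r) z i) - \sum_(i < r) (zf i - z i)).
    exact: (lsubB lN yz (lsub_sum lN _ Nzfz)).
  by rewrite sumrB opprB addrA subrK.
have Vrem : in_Vn (ann Q N) Q rem.
  by exists 1%N => p /prodsetSl [e [p' [n0e /prodset0E -> ->]]]; rewrite mulr1; apply: n0N.
have Prem : P rem := lsubB lP Py (lsub_sum lP _ Pzf).
have [r' [ns' [xs' [fam' sumE]]]] :=
  block_family_add lQ lP (And4 nscfs nsinj Vzf Pzf) n0cfs Vrem Prem.
exists r', ns', xs'; split=> //.
have -> : \sum_(i < r') xs' i = y by rewrite sumE /rem addrC subrK.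
by rewrite subrr; apply: lsub0 lQ.
Qed.

Definition ann_torsion Q n j g := G g /\ forall y, killed n j Q y -> Q (g * y).

Lemma ann_torsion_two_ideal Q n j : lsub G Q -> two_ideal G n -> two_ideal G (ann_torsion Q n j).
Proof.
move=> lQ tn; apply: two_idealP; first by move=> x [].
  split.
  - by split=> [|y _]; [apply: subalg0 | rewrite mul0r; apply: lsub0 lQ].
  - move=> x y [Gx hx] [Gy hy]; split=> [|z kz]; first exact: subalgD.
    by rewrite mulrDl; apply: lsubD lQ (hx _ kz) (hy _ kz).
  - move=> g x Gg [Gx hx]; split=> [|z kz]; first exact: subalgM.
    by rewrite -mulrA; apply: lsubM lQ Gg (hx _ kz).
move=> g x Gg [Gx hx]; split=> [|z kz]; first exact: subalgM.
by rewrite -mulrA; apply: hx; apply: killedMl.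
Qed.

Lemma ann_torsion_comaximal Q n n' j j' : lsub G Q -> cfs G n -> cfs G n' -> n <> n' ->
  exists e f, [/\ ann_torsion Q n j e, ann_torsion Q n' j' f & 1 = e + f].
Proof.
move=> lQ ncfs n'cfs nn'; have [tn tn'] := (cfs_two_ideal ncfs, cfs_two_ideal n'cfs).
have idealX_ann m k u : two_ideal G m -> idealX m k u -> ann_torsion Q m k u.
  move=> tm mku; split; first exact: idealX_sub tm mku.
  by move=> y ky; apply: killed_idealX lQ ky mku.
have [u [v [nju n'v uv]]] := comaximal_idealX tn tn' (cfs_comaximal ncfs n'cfs nn') j.
have [u' [v' [n'j'u' Tv' u'v']]] := comaximal_idealX tn' (ann_torsion_two_ideal j lQ tn)
  (ex_intro _ v (ex_intro _ u (And3 n'v (idealX_ann _ _ _ tn nju) (etrans uv (addrC _ _))))) j'.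
by exists v', u'; rewrite addrC; split=> //; apply: idealX_ann.
Qed.

Lemma block_sum_direct Q r (ns : 'I_r -> A -> Prop) (xs : 'I_r -> A) : lsub G Q ->
  (forall i, cfs G (ns i)) -> injective ns -> (forall i, in_Vn (ns i) Q (xs i)) ->
  Q (\sum_(i < r) xs i) -> forall i, Q (xs i).
Proof.
move=> lQ nscfs nsinj Vxs Qsum i.
pose jf k := proj1_sig (constructive_indefinite_description _ (Vxs k)).
have kxs k : killed (ns k) (jf k) Q (xs k).
  exact: (proj2_sig (constructive_indefinite_description _ (Vxs k))).
have tT k := ann_torsion_two_ideal (jf k) lQ (cfs_two_ideal (nscfs k)).
(* Split [1 = e + f] with [e] killing the [ns i]-torsion and [f] killing the
   torsion of every other [ns k]. *)
have sep (ks : seq 'I_r) : exists e f, [/\ ann_torsion Q (ns i) (jf i) e, G f,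
    (forall k, k \in ks -> k != i -> ann_torsion Q (ns k) (jf k) f) & 1 = e + f].
  elim: ks => [|k ks [e [f [Te Gf Tf ef]]]].
    exists 0, 1; rewrite add0r; split=> //; last exact: subalg1.
    exact: lsub0 (two_ideal_lsub (tT i)).
  have [->|ki] := eqVneq k i.
    by exists e, f; split=> // k'; rewrite inE => /predU1P [->|/Tf //]; rewrite eqxx.
  have nsik : ns i <> ns k by move=> /nsinj ik; rewrite ik eqxx in ki.
  have [e' [f' [Te' Tf' e'f']]] := ann_torsion_comaximal (jf i) (jf k) lQ (nscfs i) (nscfs k) nsik.
  have [[Ge' _] [Gf' _]] := (Te', Tf').
  exists (e * e' + e * f' + f * e'), (f * f'); split.
  - have lT := two_ideal_lsub (tT i).
    exact: lsubD lT (lsubD lT (two_idealMr (tT i) Ge' Te) (two_idealMr (tT i) Gf' Te))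
      (lsubM lT Gf Te').
  - exact: subalgM.
  - move=> k'; rewrite inE => /predU1P [-> _|k'ks k'i].
      exact: lsubM (two_ideal_lsub (tT k)) Gf Tf'.
    exact: two_idealMr (tT k') Gf' (Tf k' k'ks k'i).
  by rewrite -[1](mulr1) {1}ef e'f' mulrDl !mulrDr !addrA.
have [e [f [[_ Te] Gf Tf ef]]] := sep (enum 'I_r).
rewrite -(mul1r (xs i)) ef mulrDl; apply: (lsubD lQ (Te _ (kxs i))).
have -> : f * xs i = f * \sum_(k < r) xs k - \sum_(k < r | k != i) f * xs k.
  by rewrite (bigD1 i) //= mulrDr mulr_sumr addrK.
apply: (lsubB lQ (lsubM lQ Gf Qsum)); rewrite big_mkcond; apply: (lsub_sum lQ) => k.
by case: ifP => [ki|_]; [have [_] := Tf k (mem_enum _ k) ki; apply | apply: lsub0 lQ].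
Qed.

(** * Finiteness *)

Lemma lspan_cons X a (t : seq A) x :
  lspan X (a :: t) x <-> exists g z, [/\ X g, lspan X t z & x = g * a + z].
Proof.
split=> [[c [Xc ->]]|[g [z [Xg [c [Xc ->]] ->]]]].
  rewrite /= big_ord_recl; exists (c ord0), (\sum_(i < size t) c (lift ord0 i) * t`_i).
  by split=> //; exists (fun i => c (lift ord0 i)).
exists (fun i : 'I_(size t).+1 => if unlift ord0 i is Some j then c j else g); split.
  by move=> i; case: (unlift ord0 i).
rewrite /= big_ord_recl /= unlift_none; congr (_ + _).
by apply: eq_bigr => i _; rewrite liftK.
Qed.

Lemma lspan_lsub X (t : seq A) : lsub G X -> lsub G (lspan X t).
Proof.
move=> lX; split.
- exists (fun _ => 0); split=> [i|]; first exact: lsub0 lX.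
  by rewrite big1 // => i _; rewrite mul0r.
- move=> x y [c [Xc ->]] [c' [Xc' ->]]; exists (fun i => c i + c' i); split.
    by move=> i; apply: lsubD lX (Xc i) (Xc' i).
  by rewrite -big_split; apply: eq_bigr => i _; rewrite mulrDl.
- move=> g x Gg [c [Xc ->]]; exists (fun i => g * c i); split.
    by move=> i; apply: lsubM lX Gg (Xc i).
  by rewrite mulr_sumr; apply: eq_bigr => i _; rewrite mulrA.
Qed.

Lemma lspan_sub (t : seq A) x : {in t, forall a, G a} -> lspan G t x -> G x.
Proof.
move=> tG [c [Gc ->]]; apply: (subspace_sum subalg_subspace) => i.
exact/subalgM/tG/mem_nth.
Qed.

Lemma noetherian_lspan m : noetherian G -> left_ideal G m ->
  exists t, {in t, forall a, m a} /\ forall x, m x -> lspan G t x.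
Proof.
move=> [acc _] [mG lm].
pose next t := if excluded_middle_informative (exists x, m x /\ ~ lspan G t x) is left h
  then proj1_sig (constructive_indefinite_description _ h) :: t else t.
pose f i := iter i next [::].
have fm i : {in f i, forall a, m a}.
  elim: i => [|i IH] //=; rewrite /next; case: excluded_middle_informative => // h.
  by apply/forall_in_cons; split=> //; case: (proj2_sig (constructive_indefinite_description _ h)).
have lspan_next t x : lspan G t x -> lspan G (next t) x.
  rewrite /next; case: excluded_middle_informative => // h tx; apply/lspan_cons.
  by exists 0, x; rewrite mul0r add0r; split=> //; apply: subalg0.
have lGG : lsub G G by split; [apply: subalg0 | apply: subalgD | apply: subalgM].
have [N0 fN0] := acc (fun i => lspan G (f i))
  (fun i => conj (fun x => lspan_sub (fun a fa => mG _ (fm i a fa))) (lspan_lsub (f i) lGG))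
  (fun i x => lspan_next (f i) x).
exists (f N0); split=> // x mx; apply: NNPP => nx.
have := fN0 N0.+1 (leqnSn N0); rewrite /= /next.
case: excluded_middle_informative => [h|[]]; last by exists x.
have [_ ny] := proj2_sig (constructive_indefinite_description _ h).
move=> sub; apply/ny/sub/lspan_cons; exists 1, 0; rewrite mul1r addr0; split.
- exact: subalg1.
- exact: lsub0 (lspan_lsub (f N0) lGG).
- by [].
Qed.

Lemma Gpow_sub m k y : two_ideal G m -> Gpow m k y -> G y.
Proof.
move=> tm [r [c [p [cp ->]]]]; apply: (subspace_sum subalg_subspace) => i.
by have [Gc mp] := cp i; apply: subalgM Gc (prodset_sub tm mp).
Qed.

Lemma Gpow0 m y : G y -> Gpow m 0 y.
Proof. by move=> Gy; rewrite -[y]mulr1; apply: sums2_1; split=> //; apply: prodset0. Qed.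

Lemma Gpow1 m y : m y -> Gpow m 1 y.
Proof.
move=> my; rewrite -[y]mul1r; apply: sums2_1; split; first exact: subalg1.
by apply/prodsetSl; exists y, 1; rewrite mulr1; split=> //; apply: prodset0.
Qed.

Lemma GpowMr m k y a : Gpow m k y -> m a -> Gpow m k.+1 (y * a).
Proof.
move=> [r [c [p [cp ->]]]] ma; exists r, c, (fun i => p i * a); rewrite mulr_suml.
split=> [i|]; last by apply: eq_bigr => i _; rewrite mulrA.
by have [Gc mp] := cp i; split=> //; apply/prodsetSr; exists a, (p i).
Qed.

Lemma Gpow_lspan m (t : seq A) k y : two_ideal G m -> (forall x, m x -> lspan G t x) ->
  Gpow m k.+1 y -> lspan (Gpow m k) t y.
Proof.
move=> tm mt [r [c [p [cp ->]]]]; apply: (lsub_sum (lspan_lsub t (Gpow_lsub m k))) => i.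
have [Gc /prodsetSr [e [p' [me p'k ->]]]] := cp i.
have [g [Gg ->]] := mt e me; exists (fun l => c i * p' * g l).
split=> [l|]; last by rewrite mulrA mulr_sumr; apply: eq_bigr => l _; rewrite !mulrA.
case: k {cp} p'k => [/prodset0E ->|k p'k]; first by rewrite mulr1; apply/Gpow0/subalgM.
by rewrite -mulrA; apply: sums2_1; split=> //; apply: prodsetMr.
Qed.

Lemma Gpow_step_spans m (t D : seq A) k : two_ideal G m -> {in t, forall a, m a} ->
  (forall x, m x -> lspan G t x) -> spans_mod D (Gpow m k.+1) (Gpow m k) ->
  spans_mod [seq d * a | a <- t, d <- D] (Gpow m k.+2) (Gpow m k.+1).
Proof.
move=> tm tm' mt hD y /(Gpow_lspan tm mt); elim: t {mt} tm' y => [_ y [c [_ ->]]|a t IH].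
  exists 0; rewrite big_ord0; split; first exact: kspan0.
  exact: (eqmod_refl (lsub_subspace (Gpow_lsub _ _))).
case/forall_in_cons=> ma /IH {}IH y /lspan_cons [g [y' [Gg /IH [z' [hz' y'z']] ->]]].
have [z0 [hz0 gz0]] := hD g Gg.
exists (z0 * a + z'); split; first by apply: kspan_cat => //; apply: (kspan_map (a \o* idfun)).
rewrite /eqmod opprD addrACA -mulrBl; apply: lsubD (Gpow_lsub m k.+2) _ y'z'.
exact: GpowMr.
Qed.

Lemma cfs_spans_mod m : cfs G m -> exists B, spans_mod B m G.
Proof.
case=> _ _ _ [B [_ hB]]; exists B => g /hB [c mgc].
by exists (\sum_(i < size B) c i *: B`_i); split=> //; exists c.
Qed.

Lemma Gpow_findim m k : noetherian G -> cfs G m -> findim_mod (Gpow m k) G.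
Proof.
move=> noeth mcfs; have tm := cfs_two_ideal mcfs.
have [t [tm' mt]] := noetherian_lspan noeth (conj (fun x => @cfs_sub m x mcfs) (cfs_lsub mcfs)).
have steps j : exists D, spans_mod D (Gpow m j.+1) (Gpow m j).
  elim: j => [|j [D hD]]; last by eexists; apply: (Gpow_step_spans tm tm' mt hD).
  have [B hB] := cfs_spans_mod mcfs; exists B => y /(Gpow_sub tm) /hB [z [hz myz]].
  by exists z; split=> //; apply: Gpow1.
elim: k => [|k IH].
  by exists [::] => y Gy; exists 0; split; [apply: kspan0 | rewrite /eqmod subr0; apply: Gpow0].
by have [D hD] := steps k; apply: findim_mod_trans IH (ex_intro _ D hD).
Qed.

Lemma rspan_spans_mod s (B : seq A) (I L : A -> Prop) : subspace L ->
  {in s, forall a i, I i -> L (a * i)} -> spans_mod B I G ->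
  forall y, rspan G s y -> exists z, kspan [seq a * b | a <- s, b <- B] z /\ eqmod L y z.
Proof.
move=> sL sIL hB y [c [Gc ->]]; elim: s sIL c Gc {y} => [_ c _|a s IH].
  by exists 0; rewrite big_ord0; split; [apply: kspan0 | apply: eqmod_refl].
case/forall_in_cons=> aIL /IH {}IH c Gc; rewrite /= big_ord_recl.
have [z' [hz' qz']] := IH (fun i => c (lift ord0 i)) (fun i => Gc _).
have [z0 [hz0 qz0]] := hB _ (Gc ord0).
exists (a * z0 + z'); split; first by apply: kspan_cat => //; apply: (kspan_map (a \*o idfun)).
by rewrite /eqmod opprD addrACA -mulrBr; exact: (subspaceD sL (aIL _ qz0) qz').
Qed.

Lemma GaG_self a : GaG G a a.
Proof.
exists 1%N, (fun _ => 1), (fun _ => 1); rewrite big_ord1 mul1r mulr1.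
by split=> // i; split; apply: subalg1.
Qed.

Lemma Gam_GaG a m x : cfs G m -> Gam G a m x -> GaG G a x.
Proof.
move=> mcfs [r [g [h [gh ->]]]]; exists r, g, h; split=> // i.
by have [Gg mh] := gh i; split=> //; apply: cfs_sub mh.
Qed.

Lemma findim_GaG_AmPow m k x : noetherian G -> quasicentral G -> cfs G m ->
  findim_mod (AmPow m k) (fun y => exists u v, [/\ GaG G x u, AmPow m k v & y = u + v]).
Proof.
move=> noeth qcent mcfs; have [C hC] := Gpow_findim k noeth mcfs.
have [_ [s hs]] := qcent x; have sL := lsub_subspace (AmPow_lsub m k).
have sIL : {in s, forall a i, Gpow m k i -> AmPow m k (a * i)}.
  move=> a _ i [r [c [p [cp ->]]]]; exists r, (fun l => a * c l), p; rewrite mulr_sumr.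
  by split=> [l|]; [case: (cp l) | apply: eq_bigr => l _; rewrite mulrA].
exists [seq a * b | a <- s, b <- C] => _ [u [v [/hs xu Lv ->]]].
have [z [hz uz]] := rspan_spans_mod sL sIL hC xu.
by exists z; split=> //; rewrite /eqmod addrAC; exact: (subspaceD sL uz Lv).
Qed.

Lemma findim_Gam a m : quasicentral G -> cfs G m -> findim_mod (Gam G a m) (GaG G a).
Proof.
move=> qcent mcfs; have [_ [s hs]] := qcent a; have [B hB] := cfs_spans_mod mcfs.
have sIL : {in s, forall b i, m i -> Gam G a m (b * i)}.
  move=> b /(nthP 0) [l ls <-] i mi.
  have : rspan G s s`_l.
    exists (fun j => ((j == Ordinal ls)%:R : A)); split=> [j|].
      by case: (j == _); [apply: subalg1 | apply: subalg0].
    rewrite (bigD1 (Ordinal ls)) //= eqxx mulr1 big1 ?addr0 // => j /negbTE ->.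
    by rewrite mulr0.
  case/hs=> r [g [h [gh ->]]]; exists r, g, (fun j => h j * i); rewrite mulr_suml.
  split=> [j|]; last by apply: eq_bigr => j _; rewrite !mulrA.
  by have [Gg Gh] := gh j; split=> //; apply: lsubM (cfs_lsub mcfs) Gh mi.
exists [seq b * c | b <- s, c <- B] => y /hs ys.
exact: rspan_spans_mod (lsub_subspace (Gam_lsub a m)) sIL hB y ys.
Qed.

Theorem HC_block : noetherian G -> quasicommutative G -> quasicentral G -> HC_block_subalg G.
Proof.
move=> noeth qcomm qcent m mcfs k; have lL := AmPow_lsub m k; split=> [x|].
  pose P := fun y => exists u v, [/\ GaG G x u, AmPow m k v & y = u + v].
  have lP : lsub G P := lsub_add (GaG_lsub x) lL.
  have LP y : AmPow m k y -> P y.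
    by move=> Ly; exists 0, y; rewrite add0r; split=> //; apply: lsub0 (GaG_lsub x).
  have Px : P x by exists x, 0; rewrite addr0; split=> //; [apply: GaG_self | apply: lsub0 lL].
  have [r [ns [xs [[nscfs nsinj Vxs _] xxs]]]] :=
    block_decomposition qcomm lL lP LP (findim_GaG_AmPow k x noeth qcent mcfs) Px.
  by exists r, ns, xs.
move=> r ns xs nscfs nsinj Vxs Lsum i.
exact: block_sum_direct lL nscfs nsinj Vxs Lsum i.
Qed.

(** * Composition factors and the support *)

Definition cser Q P r (Ls : nat -> A -> Prop) :=
  [/\ forall i, (i <= r)%N -> lsub G (Ls i), Ls 0%N = Q, Ls r = P,
      forall i, (i < r)%N -> simple_pq G (Ls i) (Ls i.+1) &
      forall i x, (i <= r)%N -> Ls i x -> P x].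

Lemma cser_exists Q P : lsub G Q -> lsub G P -> (forall x, Q x -> P x) -> findim_mod Q P ->
  exists r Ls, cser Q P r Ls.
Proof.
move=> lQ lP; move: Q lQ; apply: (simple_ind lP (Phi := fun Q => exists r Ls, cser Q P r Ls)).
  move=> Q lQ QP PQ; exists 0%N, (fun _ => Q); split=> //.
  - by apply: pred_ext => x; split; [apply: QP | apply: PQ].
  - by move=> i x _; apply: QP.
move=> Q N lQ lN Nsimple NP _ [r [Ls [lLs Ls0 Lsr Lssimple LsP]]].
exists r.+1, (fun i => if i is i'.+1 then Ls i' else Q); split=> //.
- by case=> [|i] hi //; apply: lLs.
- by case=> [|i] hi /=; [rewrite Ls0 | apply: Lssimple].
- have [QN _ _] := Nsimple.
  by case=> [|i] y hi //= => [/QN /NP|]; last exact: LsP.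
Qed.

Lemma cser_cat Q1 P1 P2 r1 r2 Ls1 Ls2 : cser Q1 P1 r1 Ls1 -> cser P1 P2 r2 Ls2 ->
  cser Q1 P2 (r1 + r2) (fun i => if (i <= r1)%N then Ls1 i else Ls2 (i - r1)%N).
Proof.
move=> [lL1 L10 L1r simple1 L1P] [lL2 L20 L2r simple2 L2P].
have P12 x : P1 x -> P2 x by move=> hx; apply: (L2P 0%N) => //; rewrite L20.
split.
- by move=> i hi; case: ifP => hir; [apply: lL1 | apply: lL2; lia].
- by rewrite leq0n.
- case: ifP => h; last by rewrite addKn.
  have r20 : r2 = 0%N by lia.
  by rewrite r20 addn0 L1r -L20 -r20 L2r.
- move=> i hi; case: (ltnP i r1) => hir; first by rewrite (ltnW hir); apply: simple1.
  case: (eqVneq i r1) => [->|ir1].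
    by rewrite leqnn subSn // subnn L1r -L20; apply: simple2; lia.
  have -> : (i <= r1)%N = false by apply/negbTE; rewrite -ltnNge; lia.
  by rewrite subSn; [apply: simple2; lia | lia].
- move=> i x hi; case: ifP => h hx; first by apply/P12/(L1P i).
  by apply: (L2P (i - r1)%N) => //; lia.
Qed.

Lemma in_Fact_of_gap n Q Q0 P0 P : lsub G Q -> lsub G Q0 -> lsub G P0 -> lsub G P ->
  (forall x, Q x -> Q0 x) -> (forall x, Q0 x -> P0 x) -> (forall x, P0 x -> P x) ->
  findim_mod Q P -> (exists y, P0 y /\ ~ Q0 y) -> (forall x y, n x -> P0 y -> Q0 (x * y)) ->
  in_Fact G n Q P.
Proof.
move=> lQ lQ0 lP0 lP QQ0 Q0P0 P0P [s hs] [y [P0y Q0y]] nP0.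
have fd X Y : (forall x, Q x -> X x) -> (forall x, Y x -> P x) -> findim_mod X Y.
  by move=> QX YP; exists s; apply: (spans_mod_sub hs).
have [r1 [Ls1 c1]] := cser_exists lQ lQ0 QQ0 (fd _ _ (fun x h => h) (fun x h => P0P _ (Q0P0 _ h))).
have [r2 [Ls2 c2]] := cser_exists lQ0 lP0 Q0P0 (fd _ _ QQ0 P0P).
have [r3 [Ls3 c3]] := cser_exists lP0 lP P0P (fd _ _ (fun x h => Q0P0 _ (QQ0 _ h)) (fun x h => h)).
have [lL L0 Lr Lsimple _] := cser_cat (cser_cat c1 c2) c3.
have r2_gt0 : (0 < r2)%N.
  case: c2 => _ L20 L2r _ _; rewrite lt0n; apply/eqP => r20; apply: Q0y.
  by rewrite -L20 -r20 L2r.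
exists (r1 + r2 + r3)%N, (fun i => if (i <= r1 + r2)%N then
   (if (i <= r1)%N then Ls1 i else Ls2 (i - r1)%N) else Ls3 (i - (r1 + r2))%N).
split=> //; [by move=> z; rewrite L0 | by move=> z; rewrite Lr |].
exists r1; split; first by lia.
rewrite (_ : (r1 <= r1 + r2)%N = true); last by lia.
rewrite (_ : (r1.+1 <= r1 + r2)%N = true); last by lia.
rewrite leqnn ltnn subSn // subnn; case: c1 => _ _ -> _ _; case: c2 => _ _ _ _ L2P0.
by move=> h z nh L21z; apply: nP0 => //; apply: (L2P0 1%N).
Qed.

Lemma lsub_mulr X p : lsub G X -> lsub G (fun v => exists y, X y /\ v = y * p).
Proof.
move=> lX; split.
- by exists 0; rewrite mul0r; split=> //; apply: lsub0 lX.
- by move=> _ _ [y [Xy ->]] [z [Xz ->]]; exists (y + z); rewrite mulrDl; split=> //; apply: lsubD.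
- by move=> g _ Gg [y [Xy ->]]; exists (g * y); rewrite mulrA; split=> //; apply: lsubM.
Qed.

Lemma lsub_preimage_mulr X N p : lsub G X -> lsub G N -> lsub G (fun z => X z /\ N (z * p)).
Proof.
move=> lX lN; split.
- by rewrite mul0r; split; apply: lsub0.
- by move=> y z [Xy Ny] [Xz Nz]; rewrite mulrDl; split; apply: lsubD.
- by move=> g z Gg [Xz Nz]; rewrite -mulrA; split; apply: lsubM.
Qed.

Fixpoint layer M (cp : seq (A * A)) : A -> Prop :=
  if cp is q :: cp' then
    fun x => exists v u, [/\ exists y, GaG G q.1 y /\ v = y * q.2, layer M cp' u & x = v + u]
  else M.

Lemma layer_lsub M cp : lsub G M -> lsub G (layer M cp).
Proof. by move=> lM; elim: cp => //= q cp IH; apply/lsub_add/IH/lsub_mulr/GaG_lsub. Qed.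

Lemma layer_sup M cp x : lsub G M -> M x -> layer M cp x.
Proof.
move=> lM Mx; elim: cp => //= q cp IH; exists 0, x; rewrite add0r; split=> //.
by exists 0; rewrite mul0r; split=> //; apply: lsub0 (GaG_lsub _).
Qed.

Lemma layer_peel M cp x : lsub G M -> layer M cp x -> ~ M x ->
  exists2 q, q \in cp & exists N y, [/\ lsub G N, (forall z, M z -> N z), GaG G q.1 y,
    N (x - y * q.2) & ~ N x].
Proof.
move=> lM; elim: cp x => [x //|q cp IH x [_ [u [[y [qy ->]] lu ->]]] Mx].
have [lcpx|lcpx] := classic (layer M cp (y * q.2 + u)).
  by have [q' q'cp peel] := IH _ lcpx Mx; exists q' => //; rewrite inE q'cp orbT.
exists q; first by rewrite inE eqxx.
exists (layer M cp), y; split=> //.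
- exact: layer_lsub.
- by move=> z; apply: layer_sup.
- by rewrite addrC addKr.
Qed.

Lemma AmPow_layer m i x : AmPow m i x ->
  exists cp, {in cp, forall q, prodset m i q.2} /\ layer (AmPow m i.+1) cp x.
Proof.
case=> r [c [p [pi ->]]]; exists [seq (c t, p t) | t <- enum 'I_r]; split.
  by move=> q /mapP [t _ ->]; apply: pi.
rewrite -big_enum -(big_map (fun t => (c t, p t)) xpredT (fun q => q.1 * q.2)).
elim: [seq _ | _ <- _] => [|q cp IH]; first by rewrite big_nil; apply: lsub0 (AmPow_lsub m i.+1).
rewrite big_cons; exists (q.1 * q.2), (\sum_(q' <- cp) q'.1 * q'.2); split=> //.
by exists q.1; split=> //; apply: GaG_self.
Qed.

Lemma AmPow_le m k k' y : cfs G m -> (k <= k')%N -> AmPow m k' y -> AmPow m k y.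
Proof.
move=> mcfs /subnK <-; elim: (k' - k)%N y => [|d IH] y //=.
rewrite addSn => -[r [c [p [pk ->]]]]; apply: (lsub_sum (AmPow_lsub m k)) => i.
have [e [q [me qk ->]]] := (prodsetSl _ _ _).1 (pk i).
by rewrite mulrA; apply/IH/AmPow_prodset.
Qed.

Lemma Xset_of_level m n e i x : cfs G m -> cfs G n -> quasicentral G ->
  (forall h, n h -> AmPow m e (h * x)) -> (i < e)%N -> AmPow m i x -> ~ AmPow m i.+1 x ->
  exists a, in_Fact G n (Gam G a m) (GaG G a).
Proof.
move=> mcfs ncfs qcent nx ie /AmPow_layer [cp [cpi lx]] Lx.
have [[a pp] /cpi /= ppi [N [y [lN LN ay Nxy Nx]]]] := layer_peel (AmPow_lsub m i.+1) lx Lx.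
(* Now [x = y * pp] modulo [N] and [x] lies outside [N]: the gap between [Q0] and
   [P0] below is a nonzero subquotient of [Γ a Γ / Γ a m] annihilated by [n]. *)
pose N' := fun z => exists u v, [/\ N u, exists g, G g /\ v = g * x & z = u + v].
have lN' : lsub G N' := lsub_add lN (cyclic_lsub x).
exists a; apply: (in_Fact_of_gap (Q0 := fun z => GaG G a z /\ N (z * pp))
  (P0 := fun z => GaG G a z /\ N' (z * pp))).
- exact: Gam_lsub.
- exact: lsub_preimage_mulr (GaG_lsub a) lN.
- exact: lsub_preimage_mulr (GaG_lsub a) lN'.
- exact: GaG_lsub.
- move=> z Gamz; split; first exact: Gam_GaG Gamz.
  apply: LN; case: Gamz => r [g [h [gh ->]]]; rewrite mulr_suml.
  apply: (lsub_sum (AmPow_lsub m i.+1)) => l; have [Gg mh] := gh l.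
  rewrite -mulrA; apply: AmPow_prodset; apply/prodsetSl.
  by exists (h l), pp.
- move=> z [az Nz]; split=> //; exists (z * pp), 0; rewrite addr0; split=> //.
  by exists 0; rewrite mul0r; split=> //; apply: subalg0.
- by move=> z [].
- exact: findim_Gam.
- exists y; split; first split=> //.
    exists (y * pp - x), x; rewrite subrK; split=> //.
      by rewrite -opprB; apply: lsubN lN Nxy.
    by exists 1; rewrite mul1r; split=> //; apply: subalg1.
  by case=> _ Nypp; apply: Nx; rewrite -(subrK (y * pp) x); apply: lsubD lN Nxy Nypp.
move=> h z nh [az [u [_ [Nu [g [Gg ->]] zpp]]]].
split; first exact: lsubM (GaG_lsub a) (cfs_sub ncfs nh) az.
rewrite -mulrA zpp mulrDr mulrA; apply: (lsubD lN (lsubM lN (cfs_sub ncfs nh) Nu)).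
apply/LN/(AmPow_le mcfs ie)/nx.
exact: two_idealMr (cfs_two_ideal ncfs) Gg nh.
Qed.

Lemma Supp_witness L n x0 : lsub G L -> in_Vn n L x0 -> ~ L x0 ->
  exists x, (forall h, n h -> L (h * x)) /\ ~ L x.
Proof.
move=> lL Vx0 Lx0; have [[|j] [kx0 jmin]] := classic_ex_minn Vx0.
  by case: Lx0; rewrite -[x0]mul1r; apply/kx0/prodset0.
have [p [pj Lpx0]] : exists p, prodset n j p /\ ~ L (p * x0).
  apply: NNPP => h; suff /jmin : killed n j L x0 by rewrite ltnn.
  by move=> p pj; apply: NNPP => Lpx0; apply: h; exists p.
exists (p * x0); split=> // h nh; rewrite mulrA; apply/kx0/prodsetSl.
by exists h, p.
Qed.

End Subalgebra.


Theorem mainTheorem11 (K : fieldType) (A : algType K) (G : A -> Prop) :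
  is_subalg G -> noetherian G -> quasicommutative G -> quasicentral G ->
  HC_block_subalg G /\
  (forall m, cfs G m -> forall e : nat, (1 <= e)%N ->
     forall n, Supp G (AmPow m e) n -> Xset G m n).
Proof.
move=> subG noeth qcomm qcent; split; first exact: HC_block.
move=> m mcfs e _ n [ncfs [x0 [Vx0 Lx0]]]; split=> //.
have [x [nx Lx]] := Supp_witness (AmPow_lsub G m e) Vx0 Lx0.
have AmPow0x : AmPow m 0 x by rewrite -[x]mulr1; apply/AmPow_prodset/prodset0.
have [i [ie Lix Li1x]] := classic_ex_drop (P := fun i => AmPow m i x) AmPow0x Lx.
exact: Xset_of_level mcfs ncfs qcent nx ie Lix Li1x.
Qed.
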